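(* Let $q\in\mathbb{C}\setminus\{0\}$, $n\in\mathbb{N}$, $r\in(0,+\infty]$. (i) There exists a surjective continuous homomorphism $\pi:\mathcal{F}(\mathbb{B}_r^n)\to\mathcal{O}_q(\mathbb{B}_r^n)$ with $\zeta_i\mapsto x_i$ ($i=1,\dots,n$). (ii) $\operatorname{Ker}\pi$ equals the closed two-sided ideal of $\mathcal{F}(\mathbb{B}_r^n)$ generated by $\zeta_i\zeta_j-q\zeta_j\zeta_i$ ($1\le i<j\le n$). (iii) $\operatorname{Ker}\pi$ is a complemented subspace of $\mathcal{F}(\mathbb{B}_r^n)$. (iv) Under the identification $\mathcal{O}_q(\mathbb{B}_r^n)\cong\mathcal{F}(\mathbb{B}_r^n)/\operatorname{Ker}\pi$, for each $\rho\in(0,r)$ the norm $\|\cdot\|_{\mathbb{B},\rho}$ equals the quotient norm of $\|\cdot\|^\circ_\rho$.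
   Context: $W_n$: finite words $\alpha=(\alpha_1,\dots,\alpha_d)$ over $\{1,\dots,n\}$, $|\alpha|=d$; $p(\alpha)=(p_1(\alpha),\dots,p_n(\alpha))\in\mathbb{Z}_+^n$ with $p_i(\alpha)=\#\{j:\alpha_j=i\}$. $\mathcal{F}(\mathbb{B}_r^n)$ is the algebra of series $f=\sum_{\alpha\in W_n}c_\alpha\zeta_\alpha$ with $\|f\|^\bullet_\rho=\sum_{d\ge0}(\sum_{|\alpha|=d}|c_\alpha|^2)^{1/2}\rho^d<\infty$ for all $\rho\in(0,r)$, multiplication by concatenation, topology given by $\|\cdot\|^\bullet_\rho$; equivalently by the norms $\|f\|^\circ_\rho=\sum_{k\in\mathbb{Z}_+^n}(\sum_{\alpha\in p^{-1}(k)}|c_\alpha|^2)^{1/2}\rho^{|k|}$. $\mathcal{O}_q^{\mathrm{reg}}(\mathbb{C}^n)$: algebra generated by $x_1,\dots,x_n$ with $x_ix_j=qx_jx_i$ ($i<j$), basis $x^k$. $u_q(k)=|q|^{\sum_{i<j}k_ik_j}$, $[m]_t=1+\dots+t^{m-1}$, $[m]_t!=[1]_t\cdots[m]_t$, $[0]_t!=1$, $[k]_t!=\prod[k_i]_t!$, $|k|=\sum k_i$; $\|\sum c_kx^k\|_{\mathbb{B},\rho}=\sum|c_k|([k]_{|q|^2}!/[|k|]_{|q|^2}!)^{1/2}u_q(k)\rho^{|k|}$; $\mathcal{O}_q(\mathbb{B}_r^n)$ is the completion of $\mathcal{O}_q^{\mathrm{reg}}(\mathbb{C}^n)$ with respect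 to these norms, $\rho\in(0,r)$. *)

From Stdlib Require Import Reals List Arith ZArith ClassicalEpsilon.
Import ListNotations.
Open Scope R_scope.

Definition CC : Type := (R * R)%type.
Definition C0 : CC := (0, 0).
Definition C1 : CC := (1, 0).
Definition Cadd (z w : CC) : CC := (fst z + fst w, snd z + snd w).
Definition Copp (z : CC) : CC := (- fst z, - snd z).
Definition Csub (z w : CC) : CC := Cadd z (Copp w).
Definition Cmul (z w : CC) : CC :=
  (fst z * fst w - snd z * snd w, fst z * snd w + snd z * fst w).
Definition Cmod (z : CC) : R := sqrt (fst z ^ 2 + snd z ^ 2).
Definition Cinv (z : CC) : CC :=
  (fst z / (fst z ^ 2 + snd z ^ 2), - snd z / (fst z ^ 2 + snd z ^ 2)).
Fixpoint Cpow (z : CC) (m : nat) : CC :=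
  match m with O => C1 | S m' => Cmul z (Cpow z m') end.
Definition Cpowz (z : CC) (m : Z) : CC :=
  match m with
  | Z0 => C1
  | Zpos p => Cpow z (Pos.to_nat p)
  | Zneg p => Cpow (Cinv z) (Pos.to_nat p)
  end.
Definition Csum (l : list CC) : CC := fold_right Cadd C0 l.

Definition sumR (l : list R) : R := fold_right Rplus 0 l.
Definition prodR (l : list R) : R := fold_right Rmult 1 l.
Definition sumN (l : list nat) : nat := fold_right Nat.add 0%nat l.

Definition series_conv (u : nat -> R) : Prop :=
  exists l, Un_cv (fun N => sum_f_R0 u N) l.
(* value of a convergent series (arbitrary if divergent) *)
Definition series_val (u : nat -> R) : R :=
  epsilon (inhabits 0) (fun l => Un_cv (fun N => sum_f_R0 u N) l).

Definition is_glb (A : R -> Prop) (m : R) : Prop :=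
  (forall a, A a -> m <= a) /\ (forall eps, 0 < eps -> exists a, A a /\ a < m + eps).

(* r = Some r0 encodes r0 (with 0 < r0), r = None encodes +oo *)
Definition radius_ok (r : option R) : Prop :=
  match r with Some r0 => 0 < r0 | None => True end.
Definition rho_in (r : option R) (rho : R) : Prop :=
  0 < rho /\ match r with Some r0 => rho < r0 | None => True end.

(* letters are 0..n-1 (standing for 1..n) *)
Definition word := list nat.
Definition valid_word (n : nat) (a : word) : Prop := Forall (fun i => (i < n)%nat) a.
Fixpoint words (n d : nat) : list word :=
  match d with
  | O => [[]]
  | S d' => flat_map (fun i => map (cons i) (words n d')) (seq 0 n)
  end.

Definition Fcoef := word -> CC.   (* f = sum_alpha f(alpha) zeta_alpha *)

Definition pvec (n : nat) (a : word) : list nat :=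
  map (fun i => count_occ Nat.eq_dec a i) (seq 0 n).

Fixpoint mindices (n d : nat) : list (list nat) :=
  match n with
  | O => match d with O => [[]] | S _ => [] end
  | S n' => flat_map (fun j => map (cons j) (mindices n' (d - j))) (seq 0 (S d))
  end.

Definition Fterm (n : nat) (f : Fcoef) (rho : R) (d : nat) : R :=
  sqrt (sumR (map (fun a => Cmod (f a) ^ 2) (words n d))) * rho ^ d.
Definition Fnorm_bullet (n : nat) (f : Fcoef) (rho : R) : R := series_val (Fterm n f rho).

Definition Fterm_circ (n : nat) (f : Fcoef) (rho : R) (d : nat) : R :=
  sumR (map (fun k =>
     sqrt (sumR (map (fun a => Cmod (f a) ^ 2)
        (filter (fun a => if list_eq_dec Nat.eq_dec (pvec n a) k then true else false)
                (words n d))))) (mindices n d)) * rho ^ d.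
Definition Fnorm_circ (n : nat) (f : Fcoef) (rho : R) : R := series_val (Fterm_circ n f rho).

Definition inF (n : nat) (r : option R) (f : Fcoef) : Prop :=
  (forall a, ~ valid_word n a -> f a = C0) /\
  (forall rho, rho_in r rho -> series_conv (Fterm n f rho)).

Definition F0 : Fcoef := fun _ => C0.
Definition F1 : Fcoef := fun a => match a with [] => C1 | _ => C0 end.
Definition Fadd (f g : Fcoef) : Fcoef := fun a => Cadd (f a) (g a).
Definition Fsub (f g : Fcoef) : Fcoef := fun a => Csub (f a) (g a).
Definition Fscale (c : CC) (f : Fcoef) : Fcoef := fun a => Cmul c (f a).
(* multiplication: concatenation of words *)
Definition Fmul (f g : Fcoef) : Fcoef := fun a =>
  Csum (map (fun i => Cmul (f (firstn i a)) (g (skipn i a))) (seq 0 (S (length a)))).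
Definition zeta (i : nat) : Fcoef := fun a =>
  if list_eq_dec Nat.eq_dec a [i] then C1 else C0.

Definition Ocoef := list nat -> CC.   (* g = sum_k g(k) x^k, k a list of length n *)

Fixpoint pairsum (k : list nat) : nat :=
  match k with [] => O | a :: k' => (a * sumN k' + pairsum k')%nat end.
Definition u_q (q : CC) (k : list nat) : R := Cmod q ^ pairsum k.
Definition qint (t : R) (m : nat) : R := sumR (map (fun i => t ^ i) (seq 0 m)).
Definition qfact (t : R) (m : nat) : R := prodR (map (qint t) (seq 1 m)).
Definition qfactv (t : R) (k : list nat) : R := prodR (map (qfact t) k).
Definition Oweight (q : CC) (k : list nat) : R :=
  let t := Cmod q ^ 2 in sqrt (qfactv t k / qfact t (sumN k)) * u_q q k.

Definition Oterm (n : nat) (q : CC) (g : Ocoef) (rho : R) (d : nat) : R :=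
  sumR (map (fun k => Cmod (g k) * Oweight q k) (mindices n d)) * rho ^ d.
Definition Onorm_B (n : nat) (q : CC) (g : Ocoef) (rho : R) : R := series_val (Oterm n q g rho).

Definition inO (n : nat) (r : option R) (q : CC) (g : Ocoef) : Prop :=
  (forall k, length k <> n -> g k = C0) /\
  (forall rho, rho_in r rho -> series_conv (Oterm n q g rho)).

Fixpoint below (m : list nat) : list (list nat) :=
  match m with
  | [] => [[]]
  | a :: m' => flat_map (fun j => map (cons j) (below m')) (seq 0 (S a))
  end.
(* cross k l = sum_{i>j} k_i l_j ; then x^k x^l = q^{-cross k l} x^{k+l} *)
Fixpoint cross (k l : list nat) : nat :=
  match k, l with
  | a :: k', b :: l' => (b * sumN k' + cross k' l')%nat
  | _, _ => O
  end.
Definition Omul (q : CC) (g h : Ocoef) : Ocoef := fun m =>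
  let l_of k := map (fun p => (fst p - snd p)%nat) (combine m k) in
  Csum (map (fun k => Cmul (Cpowz q (- Z.of_nat (cross k (l_of k))))
                           (Cmul (g k) (h (l_of k)))) (below m)).
Definition Oadd (g h : Ocoef) : Ocoef := fun k => Cadd (g k) (h k).
Definition Oscale (c : CC) (g : Ocoef) : Ocoef := fun k => Cmul c (g k).
Definition O1 (n : nat) : Ocoef := fun k =>
  if list_eq_dec Nat.eq_dec k (repeat 0%nat n) then C1 else C0.
Definition xgen (n i : nat) : Ocoef := fun k =>
  if list_eq_dec Nat.eq_dec k (map (fun j => if Nat.eq_dec j i then 1%nat else 0%nat) (seq 0 n))
  then C1 else C0.

Definition Fconverges (n : nat) (r : option R) (u : nat -> Fcoef) (f : Fcoef) : Prop :=
  forall rho, rho_in r rho -> Un_cv (fun m => Fnorm_bullet n (Fsub (u m) f) rho) 0.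

Definition closed_ideal (n : nat) (r : option R) (S : Fcoef -> Prop) : Prop :=
  (forall f, S f -> inF n r f) /\
  S F0 /\
  (forall f g, S f -> S g -> S (Fadd f g)) /\
  (forall c f, S f -> S (Fscale c f)) /\
  (forall f g, S f -> inF n r g -> S (Fmul g f) /\ S (Fmul f g)) /\
  (forall u f, (forall m, S (u m)) -> inF n r f -> Fconverges n r u f -> S f).

Definition qrel (q : CC) (i j : nat) : Fcoef :=
  Fsub (Fmul (zeta i) (zeta j)) (Fscale q (Fmul (zeta j) (zeta i))).

Definition in_gen_ideal (n : nat) (r : option R) (q : CC) (f : Fcoef) : Prop :=
  forall S, closed_ideal n r S ->
    (forall i j, (i < j < n)%nat -> S (qrel q i j)) -> S f.

From Pilot Require Import Defs.
From Stdlib Require Import Reals List Arith ZArith Lra Lia ClassicalEpsilon FunctionalExtensionality Classical Permutation.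
From Coquelicot Require Complex.
Import ListNotations.
Open Scope R_scope.

(* The homomorphism [pi_q] sends the word zeta_a to q^(-inv a) x^(p a), where [inv a] is
   the number of inversions of [a].  It is multiplicative because the inversions of a
   concatenation [b ++ c] are those of [b], those of [c], and the pairs across, whose
   number [cross (p b) (p c)] is the exponent in the product of O_q.

   The analysis happens on one fibre p^-1(k) of the Hilbert norm |.|^bullet at a time.
   There [pi_q] is the functional f |-> <f, lambda> with lambda_a = q^(-inv a), and the
   q-multinomial identity sum_(p a = k) t^(coinv a) = [|k|]_t! / [k]_t!  (t = |q|^2)
   says exactly that |lambda|^-1 is the weight of x^k in ||.||_B.  Hence the least-norm
   lift of g is g(k) lambda / |lambda|^2 on each fibre, which gives surjectivity and
   the quotient norm (iv), while f - lift (pi f) is the fibrewise orthogonal projection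
   onto Ker pi, of norm at most 1 (iii).  Degree d has at most (d+1)^n fibres; this
   polynomial factor is absorbed by a slightly larger radius, which gives continuity.

   Finally zeta_a - lambda_a zeta_(sort a) lies in every closed ideal containing the
   relations, by bubble sort: swapping an adjacent descent is one relation and lowers
   [inv] by one.  A kernel element is the limit of its truncations, each a finite
   combination of such differences (ii). *)

(** * Finite sums and complex numbers *)

Definition rsum {A} (l : list A) (F : A -> R) : R := sumR (map F l).

Lemma rsum_nil {A} (F : A -> R) : rsum [] F = 0.
Proof. reflexivity. Qed.
Lemma rsum_cons {A} (x : A) l F : rsum (x :: l) F = F x + rsum l F.
Proof. reflexivity. Qed.
Lemma rsum_app {A} (l1 l2 : list A) F : rsum (l1 ++ l2) F = rsum l1 F + rsum l2 F.
Proof. induction l1; unfold rsum in *; simpl; [lra|]. rewrite IHl1; lra. Qed.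
Lemma rsum_ext {A} (l : list A) F G : (forall x, In x l -> F x = G x) -> rsum l F = rsum l G.
Proof. induction l; intros H; unfold rsum in *; simpl; auto.
  rewrite H by (left; auto). rewrite IHl; auto. intros; apply H; right; auto. Qed.
Lemma rsum_plus {A} (l : list A) F G : rsum l (fun x => F x + G x) = rsum l F + rsum l G.
Proof. induction l; unfold rsum in *; simpl; [lra|]. rewrite IHl; lra. Qed.
Lemma rsum_scal {A} (l : list A) c F : rsum l (fun x => c * F x) = c * rsum l F.
Proof. induction l; unfold rsum in *; simpl; [lra|]. rewrite IHl; lra. Qed.
Lemma rsum_opp {A} (l : list A) F : rsum l (fun x => - F x) = - rsum l F.
Proof. induction l; unfold rsum in *; simpl; [lra|]. rewrite IHl; lra. Qed.
Lemma rsum_minus {A} (l : list A) F G : rsum l (fun x => F x - G x) = rsum l F - rsum l G.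
Proof. induction l; unfold rsum in *; simpl; [lra|]. rewrite IHl; lra. Qed.
Lemma rsum_zero {A} (l : list A) F : (forall x, In x l -> F x = 0) -> rsum l F = 0.
Proof. intros H. rewrite (rsum_ext l F (fun _ => 0)) by auto.
  induction l; unfold rsum in *; simpl; auto. rewrite IHl; [lra|]. intros; apply H; right; auto. Qed.
Lemma rsum_le {A} (l : list A) F G : (forall x, In x l -> F x <= G x) -> rsum l F <= rsum l G.
Proof. induction l; intros H; unfold rsum in *; simpl; [lra|].
  assert (F a <= G a) by (apply H; left; auto).
  assert (sumR (map F l) <= sumR (map G l)) by (apply IHl; intros; apply H; right; auto). lra. Qed.
Lemma rsum_nonneg {A} (l : list A) F : (forall x, In x l -> 0 <= F x) -> 0 <= rsum l F.
Proof. intros H. replace 0 with (rsum l (fun _ => 0)). apply rsum_le; auto.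
  apply rsum_zero; auto. Qed.
Lemma rsum_map {A B} (l : list A) (g : A -> B) F : rsum (map g l) F = rsum l (fun x => F (g x)).
Proof. unfold rsum; rewrite map_map; auto. Qed.
Lemma rsum_flat_map {A B} (l : list A) (g : A -> list B) F :
  rsum (flat_map g l) F = rsum l (fun x => rsum (g x) F).
Proof. induction l; simpl; auto. rewrite rsum_app, rsum_cons, IHl; auto. Qed.
Lemma rsum_swap {A B} (l1 : list A) (l2 : list B) F :
  rsum l1 (fun x => rsum l2 (F x)) = rsum l2 (fun y => rsum l1 (fun x => F x y)).
Proof. induction l1; simpl.
  - rewrite rsum_nil. symmetry; apply rsum_zero; auto.
  - rewrite rsum_cons, IHl1, <- rsum_plus. apply rsum_ext; intros; rewrite rsum_cons; auto. Qed.
Lemma rsum_single {A} (l : list A) F x : NoDup l -> In x l ->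
  (forall y, In y l -> y <> x -> F y = 0) -> rsum l F = F x.
Proof. induction l; intros Hn Hi H; [destruct Hi|]. inversion Hn; subst.
  rewrite rsum_cons. destruct Hi as [->|Hi].
  - rewrite rsum_zero; [lra|]. intros y Hy; apply H; [right; auto|]. intros ->; auto.
  - rewrite IHl; auto. rewrite H; [lra|left; auto|]. intros ->; auto.
    intros; apply H; auto; right; auto. Qed.
Lemma rsum_seqS n (F : nat -> R) : rsum (seq 0 (S n)) F = F 0%nat + rsum (seq 0 n) (fun i => F (S i)) :> R.
Proof. simpl (seq 0 (S n)). rewrite <- seq_shift. rewrite rsum_cons, rsum_map. auto. Qed.
Lemma rsum_seq_sum (F : nat -> R) d : rsum (seq 0 (S d)) F = sum_f_R0 F d.
Proof. induction d. unfold rsum; simpl; ring. rewrite seq_S, rsum_app, IHd. simpl. unfold rsum; simpl. ring. Qed.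
Lemma rsum_filter {A} (p : A -> bool) (h : A -> R) l :
  sumR (map h (filter p l)) = rsum l (fun a => if p a then h a else 0).
Proof. induction l; simpl; auto. rewrite rsum_cons. destruct (p a); simpl; rewrite IHl; ring. Qed.

Lemma CC_eq (z w : CC) : fst z = fst w -> snd z = snd w -> z = w.
Proof. destruct z, w; simpl; intros; subst; auto. Qed.
Ltac Csolve := repeat match goal with z : CC |- _ => destruct z end;
   unfold Cadd, Cmul, Csub, Copp, C0, Defs.C1 in *; simpl in *; apply CC_eq; simpl; ring.

Definition csum {A} (l : list A) (F : A -> CC) : CC := Csum (map F l).

Lemma csum_eq {A} (l : list A) F :
  csum l F = (rsum l (fun x => fst (F x)), rsum l (fun x => snd (F x))).
Proof. induction l; unfold csum, rsum in *; simpl; auto. rewrite IHl. reflexivity. Qed.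
Lemma csum_ext {A} (l : list A) F G : (forall x, In x l -> F x = G x) -> csum l F = csum l G.
Proof. intros H; rewrite !csum_eq; f_equal; apply rsum_ext; intros; rewrite H; auto. Qed.
Lemma csum_zero {A} (l : list A) F : (forall x, In x l -> F x = C0) -> csum l F = C0.
Proof. intros H; rewrite csum_eq; unfold C0; f_equal; apply rsum_zero; intros; rewrite H; auto. Qed.
Lemma csum_single {A} (l : list A) F x : NoDup l -> In x l ->
  (forall y, In y l -> y <> x -> F y = C0) -> csum l F = F x.
Proof. intros; rewrite csum_eq. apply CC_eq; simpl; erewrite rsum_single; eauto;
  intros; rewrite H1; auto. Qed.
Lemma csum_add {A} (l : list A) F G : csum l (fun x => Cadd (F x) (G x)) = Cadd (csum l F) (csum l G).
Proof. rewrite !csum_eq; unfold Cadd; simpl; f_equal; apply rsum_plus. Qed.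
Lemma csum_sub {A} (l : list A) F G : csum l (fun x => Csub (F x) (G x)) = Csub (csum l F) (csum l G).
Proof. rewrite !csum_eq. unfold Csub, Cadd, Copp; simpl. f_equal; rewrite <- rsum_opp, <- rsum_plus; auto. Qed.
Lemma csum_scal {A} (l : list A) c F : csum l (fun x => Cmul c (F x)) = Cmul c (csum l F).
Proof. rewrite !csum_eq; unfold Cmul; simpl. f_equal.
  - rewrite rsum_minus, !rsum_scal; auto.
  - rewrite rsum_plus, !rsum_scal; auto. Qed.
Lemma csum_flat_map {A B} (l : list A) (g : A -> list B) F :
  csum (flat_map g l) F = csum l (fun x => csum (g x) F).
Proof. rewrite !csum_eq, rsum_flat_map, rsum_flat_map. f_equal; apply rsum_ext; intros;
  rewrite csum_eq; auto. Qed.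
Lemma csum_swap {A B} (l1 : list A) (l2 : list B) F :
  csum l1 (fun x => csum l2 (F x)) = csum l2 (fun y => csum l1 (fun x => F x y)).
Proof. rewrite !csum_eq. f_equal.
  - rewrite (rsum_ext l1 _ (fun x => rsum l2 (fun y => fst (F x y)))) by (intros; rewrite csum_eq; auto).
    rewrite rsum_swap. apply rsum_ext; intros; rewrite csum_eq; auto.
  - rewrite (rsum_ext l1 _ (fun x => rsum l2 (fun y => snd (F x y)))) by (intros; rewrite csum_eq; auto).
    rewrite rsum_swap. apply rsum_ext; intros; rewrite csum_eq; auto. Qed.
Lemma csum_cons {A} x (l : list A) F : csum (x :: l) F = Cadd (F x) (csum l F).
Proof. reflexivity. Qed.

(* [CC] and [Cmod] are convertible to Coquelicot's [C] and [Cmod]. *)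
Lemma Cmod_mul z w : Cmod (Cmul z w) = Cmod z * Cmod w.
Proof. exact (Complex.Cmod_mult z w). Qed.
Lemma Cmod_ge0 z : 0 <= Cmod z.
Proof. exact (Complex.Cmod_ge_0 z). Qed.
Lemma Cmod_pow z m : Cmod (Cpow z m) = Cmod z ^ m.
Proof. exact (Complex.Cmod_pow z m). Qed.
Lemma Cmod_Cinv z : z <> C0 -> Cmod (Cinv z) = / Cmod z.
Proof. intros H. exact (Complex.Cmod_inv z H). Qed.
Lemma Cmod_triangle z w : Cmod (Cadd z w) <= Cmod z + Cmod w.
Proof. exact (Complex.Cmod_triangle z w). Qed.
Lemma Cmod_opp z : Cmod (Copp z) = Cmod z.
Proof. exact (Complex.Cmod_opp z). Qed.
Lemma Cmod_C0 : Cmod C0 = 0.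
Proof. exact Complex.Cmod_0. Qed.
Lemma Cmod_eq0 z : Cmod z = 0 -> z = C0.
Proof. exact (Complex.Cmod_eq_0 z). Qed.
Lemma Cmod_pos z : z <> C0 -> 0 < Cmod z.
Proof. intros H. pose proof (Cmod_ge0 z). destruct H0; auto. exfalso; apply H, Cmod_eq0; auto. Qed.
Lemma Cmod_sq z : Cmod z ^ 2 = fst z ^ 2 + snd z ^ 2.
Proof. unfold Cmod. rewrite pow2_sqrt; auto. pose proof (pow2_ge_0 (fst z)); pose proof (pow2_ge_0 (snd z)); lra. Qed.
Lemma Cmod_add_sq z w : Cmod (Cadd z w) ^ 2 <= (Cmod z + Cmod w) ^ 2.
Proof. pose proof (Cmod_triangle z w). pose proof (Cmod_ge0 (Cadd z w)). nra. Qed.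

Lemma Cmul_assoc a b c : Cmul a (Cmul b c) = Cmul (Cmul a b) c.
Proof. Csolve. Qed.
Lemma Cmul_comm a b : Cmul a b = Cmul b a.
Proof. Csolve. Qed.
Lemma Cmul_1_l a : Cmul Defs.C1 a = a.
Proof. Csolve. Qed.
Lemma Cmul_0_r a : Cmul a C0 = C0.
Proof. Csolve. Qed.
Lemma Cmul_0_l a : Cmul C0 a = C0.
Proof. Csolve. Qed.

Lemma Cpow_add z a b : Cpow z (a + b) = Cmul (Cpow z a) (Cpow z b).
Proof. induction a; simpl. rewrite Cmul_1_l; auto. rewrite IHa, Cmul_assoc; auto. Qed.

Lemma Cpowz_neg q m : Cpowz q (- Z.of_nat m) = Cpow (Cinv q) m.
Proof. destruct m; simpl; auto. rewrite SuccNat2Pos.id_succ. auto. Qed.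

Lemma Cinv_mul q : q <> C0 -> Cmul (Cinv q) q = Defs.C1.
Proof. intros H. destruct q as [x y]. unfold Cinv, Cmul, Defs.C1; simpl.
  assert (x ^ 2 + y ^ 2 <> 0).
  { intros E. apply H. unfold C0. assert (x = 0) by nra. assert (y = 0) by nra. subst; auto. }
  apply CC_eq; simpl. field; simpl in H0; lra. field. simpl in H0; lra. Qed.

Definition Cconj (z : CC) : CC := (fst z, - snd z).
Definition RC (r : R) : CC := (r, 0).
Lemma Cmul_conj z : Cmul z (Cconj z) = RC (Cmod z ^ 2).
Proof. rewrite Cmod_sq. destruct z; unfold Cmul, Cconj, RC; simpl; apply CC_eq; simpl; ring. Qed.
Lemma Cmod_Cconj z : Cmod (Cconj z) = Cmod z.
Proof. unfold Cmod, Cconj; simpl. f_equal. ring. Qed.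
Lemma Cmod_RC r : 0 <= r -> Cmod (RC r) = r.
Proof. intros H. unfold Cmod, RC; simpl. replace (r * (r * 1) + 0 * (0 * 1)) with (r ^ 2) by ring. apply sqrt_pow2; auto. Qed.

(** * Words, multi-indices and inversions *)

Lemma NoDup_flat_map_cons {A} (l : list A) (L : A -> list (list A)) :
  NoDup l -> (forall x, NoDup (L x)) -> NoDup (flat_map (fun x => map (cons x) (L x)) l).
Proof.
  induction l; intros Hl HL; simpl; [constructor|]. inversion Hl; subst.
  apply NoDup_app; auto.
  - apply NoDup_map_NoDup_ForallPairs; auto. intros u v _ _ H; inversion H; auto.
  - intros w Hw1 Hw2. apply in_map_iff in Hw1 as [u [<- _]].
    apply in_flat_map in Hw2 as [y [Hy Hw]]. apply in_map_iff in Hw as [v [Hv _]].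
    inversion Hv; subst; auto.
Qed.

Lemma in_words n d a : In a (words n d) <-> length a = d /\ valid_word n a.
Proof.
  revert a; induction d; intros a; simpl.
  - split. intros [<-|[]]; split; auto; constructor.
    intros [H _]; destruct a; [auto|discriminate].
  - rewrite in_flat_map. split.
    + intros [i [Hi Ha]]. apply in_map_iff in Ha as [b [<- Hb]].
      apply IHd in Hb as [Hl Hv]. apply in_seq in Hi. split; simpl; auto. constructor; auto; lia.
    + intros [Hl Hv]. destruct a as [|i b]; [discriminate|]. inversion Hv; subst.
      exists i; split. apply in_seq; lia. apply in_map. apply IHd; split; auto.
Qed.

Lemma NoDup_words n d : NoDup (words n d).
Proof. induction d; simpl. repeat constructor; auto. apply NoDup_flat_map_cons; auto. apply seq_NoDup. Qed.

Lemma in_mindices n d k : In k (mindices n d) <-> length k = n /\ sumN k = d.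
Proof.
  revert d k; induction n; intros d k.
  - simpl; destruct d; simpl; split.
    + intros [<-|[]]; auto.
    + intros [H _]; destruct k; [auto|discriminate].
    + intros [].
    + intros [H1 H2]; destruct k; simpl in *; lia.
  - cbn [mindices]. rewrite in_flat_map. split.
    + intros [j [Hj Hk]]. apply in_map_iff in Hk as [b [<- Hb]].
      apply IHn in Hb as [Hl Hs]. apply in_seq in Hj. simpl. split; auto. lia.
    + intros [Hl Hs]. destruct k as [|j b]; [discriminate|]. simpl in Hl, Hs.
      exists j; split. apply in_seq; lia. apply in_map. apply IHn; split; lia.
Qed.

Lemma NoDup_mindices n d : NoDup (mindices n d).
Proof. revert d; induction n; intros d. simpl; destruct d; repeat constructor; auto. cbn [mindices].
  apply NoDup_flat_map_cons; auto. apply seq_NoDup. Qed.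

Fixpoint incr (k : list nat) (i : nat) : list nat :=
  match k, i with
  | [], _ => []
  | x :: k', O => S x :: k'
  | x :: k', S i' => x :: incr k' i'
  end.
Lemma incr_length k i : length (incr k i) = length k.
Proof. revert i; induction k; intros [|i]; simpl; auto. Qed.
Lemma nth_incr k i j : (i < length k)%nat ->
  nth j (incr k i) 0%nat = (nth j k 0 + if Nat.eq_dec i j then 1 else 0)%nat.
Proof. revert i j; induction k; intros i j H; simpl in *; [lia|].
  destruct i, j; simpl; try lia. rewrite IHk by lia. destruct (Nat.eq_dec i j), (Nat.eq_dec (S i) (S j)); lia. Qed.
Lemma sumN_incr k i : (i < length k)%nat -> sumN (incr k i) = S (sumN k).
Proof. revert i; induction k; intros [|i] H; simpl in *; try lia. rewrite IHk; lia. Qed.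

Lemma pvec_length n a : length (pvec n a) = n.
Proof. unfold pvec; rewrite length_map, length_seq; auto. Qed.
Lemma nth_pvec n a j : (j < n)%nat -> nth j (pvec n a) 0%nat = count_occ Nat.eq_dec a j.
Proof. intros H. unfold pvec. rewrite nth_indep with (d' := count_occ Nat.eq_dec a 0%nat) by (rewrite length_map, length_seq; auto).
  rewrite map_nth, seq_nth; auto. Qed.

Lemma pvec_cons n x a : (x < n)%nat -> pvec n (x :: a) = incr (pvec n a) x.
Proof. intros H. apply nth_ext with 0%nat 0%nat. rewrite incr_length, !pvec_length; auto.
  intros j Hj. rewrite pvec_length in Hj. rewrite nth_incr by (rewrite pvec_length; auto).
  rewrite !nth_pvec by auto. simpl. destruct (Nat.eq_dec x j); lia. Qed.

Lemma pvec_nil n : pvec n [] = repeat 0%nat n.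
Proof. unfold pvec. apply nth_ext with 0%nat 0%nat. rewrite length_map, length_seq, repeat_length; auto.
  intros j Hj. rewrite length_map, length_seq in Hj. rewrite nth_repeat_lt by auto.
  rewrite nth_indep with (d' := count_occ Nat.eq_dec [] 0%nat) by (rewrite length_map, length_seq; auto).
  rewrite map_nth; auto. Qed.

Lemma sumN_repeat0 n : sumN (repeat 0%nat n) = 0%nat.
Proof. induction n; simpl; auto. Qed.

Lemma sumN_pvec n a : valid_word n a -> sumN (pvec n a) = length a.
Proof. induction a; intros Hv. rewrite pvec_nil, sumN_repeat0; auto.
  inversion Hv; subst. rewrite pvec_cons by auto. rewrite sumN_incr by (rewrite pvec_length; auto).
  simpl; rewrite IHa; auto. Qed.

Lemma pvec_in_mindices n a : valid_word n a -> In (pvec n a) (mindices n (length a)).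
Proof. intros; apply in_mindices; split. apply pvec_length. apply sumN_pvec; auto. Qed.

Lemma rsum_words_by_pvec n d (h : word -> R) :
  rsum (words n d) h =
  rsum (mindices n d) (fun k => rsum (words n d)
       (fun a => if list_eq_dec Nat.eq_dec (pvec n a) k then h a else 0)).
Proof. rewrite rsum_swap. apply rsum_ext. intros a Ha. apply in_words in Ha as [Hl Hv].
  symmetry. rewrite (rsum_single _ _ (pvec n a)).
  - destruct list_eq_dec; [auto|congruence].
  - apply NoDup_mindices.
  - subst; apply pvec_in_mindices; auto.
  - intros y _ Hy. destruct list_eq_dec; [congruence|auto]. Qed.

Lemma rsum_words_add n i j (F : word -> word -> R) :
  rsum (words n (i + j)) (fun w => F (firstn i w) (skipn i w)) =
  rsum (words n i) (fun b => rsum (words n j) (fun c => F b c)).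
Proof.
  revert F; induction i; intros F; simpl.
  - rewrite rsum_cons, rsum_nil. rewrite Rplus_0_r. auto.
  - rewrite !rsum_flat_map. apply rsum_ext; intros x _. rewrite !rsum_map. simpl.
    apply (IHi (fun b c => F (x :: b) c)).
Qed.

Lemma firstn_skipn_app_len {A} (b c : list A) : firstn (length b) (b ++ c) = b /\ skipn (length b) (b ++ c) = c.
Proof. split. rewrite firstn_app, Nat.sub_diag, firstn_all; simpl; apply app_nil_r.
  rewrite skipn_app, Nat.sub_diag, skipn_all; auto. Qed.

Fixpoint inversions (a : word) : nat :=
  match a with [] => O | x :: a' => (inversions a' + length (filter (fun z => z <? x) a'))%nat end.
Fixpoint coinversions (a : word) : nat :=
  match a with [] => O | x :: a' => (coinversions a' + length (filter (fun z => x <? z) a'))%nat end.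

Fixpoint decr (k : list nat) (i : nat) : list nat :=
  match k, i with
  | [], _ => []
  | x :: k', O => (x - 1)%nat :: k'
  | x :: k', S i' => x :: decr k' i'
  end.

Lemma decr_length k i : length (decr k i) = length k.
Proof. revert i; induction k; intros [|i]; simpl; auto. Qed.
Lemma decr_incr k i : decr (incr k i) i = k.
Proof. revert i; induction k; intros [|i]; simpl; auto. rewrite Nat.sub_0_r; auto. rewrite IHk; auto. Qed.
Lemma incr_decr k i : (1 <= nth i k 0%nat)%nat -> incr (decr k i) i = k.
Proof. revert i; induction k; intros [|i] H; simpl in *; auto. f_equal; lia. rewrite IHk; auto. Qed.
Lemma nth_incr_self k i : (i < length k)%nat -> (1 <= nth i (incr k i) 0%nat)%nat.
Proof. revert i; induction k; intros [|i] H; simpl in *; try lia. apply IHk; lia. Qed.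

Lemma incr_eq_iff k' k i : (i < length k')%nat ->
  (incr k' i = k <-> (k' = decr k i /\ (1 <= nth i k 0%nat)%nat)).
Proof. intros H; split.
  - intros <-. rewrite decr_incr. split; auto. apply nth_incr_self; auto.
  - intros [-> H2]. apply incr_decr; auto. Qed.

Lemma sumN_ge_nth k i : (nth i k 0 <= sumN k)%nat.
Proof. revert i; induction k; intros [|i]; simpl; try lia. specialize (IHk i); lia. Qed.

Lemma sumN_decr k i : (1 <= nth i k 0%nat)%nat -> sumN (decr k i) = (sumN k - 1)%nat.
Proof. revert i; induction k; intros [|i] H; simpl in *; try lia. rewrite IHk by auto.
  pose proof (sumN_ge_nth k i). lia. Qed.

Lemma sumN_skipn_decr k i : sumN (skipn (S i) (decr k i)) = sumN (skipn (S i) k).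
Proof. revert i; induction k; intros [|i]; simpl; auto. apply IHk. Qed.

Lemma rsum_seq_pow_shift t a : forall s, rsum (seq s a) (fun i => t ^ i) = t ^ s * rsum (seq 0 a) (fun i => t ^ i).
Proof. induction a; intros s. unfold rsum; simpl; ring.
  simpl seq. rewrite !rsum_cons. rewrite (IHa (S s)), (IHa 1%nat). simpl. ring. Qed.

Lemma qint_add t a s : qint t (s + a) = qint t s + t ^ s * qint t a.
Proof. change (rsum (seq 0 (s + a)) (fun i => t ^ i) = rsum (seq 0 s) (fun i => t ^ i) + t ^ s * rsum (seq 0 a) (fun i => t ^ i)).
  rewrite seq_app, rsum_app, Nat.add_0_l, (rsum_seq_pow_shift t a s). ring. Qed.

Lemma qint_0 t : qint t 0 = 0.
Proof. reflexivity. Qed.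

Lemma qint_pos t m : 0 < t -> (1 <= m)%nat -> 0 < qint t m.
Proof. intros Ht Hm. destruct m; [lia|]. change (0 < rsum (seq 0 (S m)) (fun i => t ^ i)).
  rewrite rsum_seqS. simpl pow at 1.
  assert (0 <= rsum (seq 0 m) (fun i => t ^ S i)) by (apply rsum_nonneg; intros; apply pow_le; lra). lra. Qed.

Lemma qfact_S t m : qfact t (S m) = qfact t m * qint t (S m).
Proof. unfold qfact. rewrite seq_S, map_app. simpl.
  generalize (map (qint t) (seq 1 m)). intros l. induction l; simpl; [ring|]. rewrite IHl; ring. Qed.

Lemma qfact_pos t m : 0 < t -> 0 < qfact t m.
Proof. intros Ht; induction m. unfold qfact; simpl; lra. rewrite qfact_S.
  apply Rmult_lt_0_compat; auto. apply qint_pos; auto; lia. Qed.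

Lemma qfactv_pos t k : 0 < t -> 0 < qfactv t k.
Proof. intros Ht; induction k; unfold qfactv in *; simpl; [lra|]. apply Rmult_lt_0_compat; auto. apply qfact_pos; auto. Qed.

Lemma qfactv_decr t k i : (1 <= nth i k 0%nat)%nat -> qfactv t k = qint t (nth i k 0%nat) * qfactv t (decr k i).
Proof. revert i; induction k; intros [|i] H; simpl in *; try lia; unfold qfactv in *; simpl.
  - destruct a; [lia|]. simpl. rewrite Nat.sub_0_r, qfact_S. ring.
  - rewrite (IHk i H). ring. Qed.

Lemma qfactv_repeat0 t n : qfactv t (repeat 0%nat n) = 1.
Proof. induction n; unfold qfactv in *; simpl; auto. rewrite IHn. unfold qfact; simpl; ring. Qed.

Lemma qint_sumN_split t k :
  rsum (seq 0 (length k)) (fun i => t ^ sumN (skipn (S i) k) * qint t (nth i k 0%nat)) = qint t (sumN k).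
Proof. induction k. reflexivity. cbn [length].
  rewrite rsum_seqS.
  rewrite (rsum_ext _ _ (fun i => t ^ sumN (skipn (S i) k) * qint t (nth i k 0%nat))) by reflexivity.
  rewrite IHk. simpl skipn. simpl nth. simpl sumN. rewrite Nat.add_comm, qint_add. ring. Qed.

Lemma sumN_skipn_incr k m y : (y < length k)%nat ->
  sumN (skipn m (incr k y)) = (sumN (skipn m k) + if m <=? y then 1 else 0)%nat.
Proof. revert m y; induction k; intros m y H; simpl in *; [lia|].
  destruct m, y; simpl.
  - lia.
  - rewrite sumN_incr by lia. lia.
  - lia.
  - apply IHk; lia. Qed.

Lemma sumN_skipn_repeat0 m n : sumN (skipn m (repeat 0%nat n)) = 0%nat.
Proof. revert m; induction n; intros [|m]; simpl; auto. apply sumN_repeat0. Qed.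

Lemma count_gt_pvec n x a : valid_word n a -> (x < n)%nat ->
  length (filter (fun z => x <? z) a) = sumN (skipn (S x) (pvec n a)).
Proof. induction a; intros Hv Hx. rewrite pvec_nil. simpl length.
  rewrite <- (sumN_skipn_repeat0 (S x) n) at 1. reflexivity.
  inversion Hv; subst. rewrite pvec_cons by auto. rewrite sumN_skipn_incr by (rewrite pvec_length; auto).
  rewrite <- IHa by auto. cbn [filter]. destruct (x <? a) eqn:E1, (S x <=? a) eqn:E2; cbn [length];
    apply Nat.ltb_lt in E1 || apply Nat.ltb_ge in E1; apply Nat.leb_le in E2 || apply Nat.leb_gt in E2; lia. Qed.

Lemma pairsum_incr k i : (i < length k)%nat -> pairsum (incr k i) = (pairsum k + (sumN k - nth i k 0%nat))%nat.
Proof. revert i; induction k; intros [|i] H; simpl in *; try lia.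
  rewrite IHk by lia. rewrite sumN_incr by lia. pose proof (sumN_ge_nth k i). nia. Qed.

Lemma count_split x a :
  (length (filter (fun z => z <? x) a) + length (filter (fun z => x <? z) a) + count_occ Nat.eq_dec a x)%nat = length a.
Proof. induction a; simpl; auto. destruct (a <? x) eqn:E1, (x <? a) eqn:E2, (Nat.eq_dec a x);
  simpl; apply Nat.ltb_lt in E1 || apply Nat.ltb_ge in E1; apply Nat.ltb_lt in E2 || apply Nat.ltb_ge in E2; lia. Qed.

Lemma pairsum_pvec n a : valid_word n a -> pairsum (pvec n a) = (inversions a + coinversions a)%nat.
Proof. induction a; intros Hv. rewrite pvec_nil. simpl. clear. induction n; simpl; auto.
  inversion Hv; subst. rewrite pvec_cons by auto. rewrite pairsum_incr by (rewrite pvec_length; auto).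
  rewrite IHa by auto. rewrite sumN_pvec by auto. rewrite nth_pvec by auto. simpl.
  pose proof (count_split a a0). lia. Qed.

Definition coinv_genfun (n : nat) (t : R) (k : list nat) : R :=
  rsum (words n (sumN k)) (fun a => if list_eq_dec Nat.eq_dec (pvec n a) k then t ^ coinversions a else 0).

Lemma sumN0_repeat k : sumN k = 0%nat -> k = repeat 0%nat (length k).
Proof. induction k; simpl; intros; auto. f_equal; [lia|]. apply IHk; lia. Qed.

(* Removing the first letter [i] of a word in the fibre of [k] lands in the fibre of
   [decr k i] and loses the [sumN (skipn (S i) k)] coinversions starting at that letter. *)
Lemma coinv_genfun_first_letter n t d k i : (i < n)%nat -> length k = n -> sumN k = S d ->
  rsum (words n d) (fun a => if list_eq_dec Nat.eq_dec (pvec n (i :: a)) k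
                             then t ^ coinversions (i :: a) else 0) =
  if le_dec 1 (nth i k 0%nat) then t ^ sumN (skipn (S i) k) * coinv_genfun n t (decr k i) else 0.
Proof.
  intros Hi Hl Hs. destruct le_dec as [Hle|Hle].
  - unfold coinv_genfun. rewrite sumN_decr, Hs by auto. simpl (S d - 1)%nat. rewrite Nat.sub_0_r.
    rewrite <- rsum_scal. apply rsum_ext. intros a Ha. apply in_words in Ha as [_ Hv].
    rewrite pvec_cons by lia.
    assert (Hiff := incr_eq_iff (pvec n a) k i ltac:(rewrite pvec_length; lia)).
    destruct (list_eq_dec Nat.eq_dec (incr (pvec n a) i) k) as [E|E];
    destruct (list_eq_dec Nat.eq_dec (pvec n a) (decr k i)) as [E'|E']; try tauto.
    + cbn [coinversions]. rewrite pow_add, count_gt_pvec with (n := n) by (auto; lia).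
      rewrite E', sumN_skipn_decr. ring.
    + ring.
  - apply rsum_zero. intros a Ha. apply in_words in Ha as [_ Hv]. rewrite pvec_cons by lia.
    destruct list_eq_dec as [E|E]; auto. exfalso. apply Hle.
    apply (incr_eq_iff (pvec n a) k i); auto. rewrite pvec_length; lia.
Qed.

Lemma coinv_genfun_qmultinomial n t : 0 < t -> forall d k, length k = n -> sumN k = d ->
  coinv_genfun n t k * qfactv t k = qfact t d.
Proof.
  intros Ht d; induction d; intros k Hl Hs.
  - unfold coinv_genfun. rewrite Hs. simpl. rewrite rsum_cons, rsum_nil.
    apply sumN0_repeat in Hs. rewrite Hl in Hs. subst k.
    rewrite pvec_nil. destruct list_eq_dec; [|congruence]. simpl. rewrite qfactv_repeat0. unfold qfact; simpl; ring.
  - unfold coinv_genfun. rewrite Hs. cbn [words]. rewrite rsum_flat_map.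
    rewrite (rsum_ext _ _ (fun i => if le_dec 1 (nth i k 0%nat)
               then t ^ sumN (skipn (S i) k) * coinv_genfun n t (decr k i) else 0)).
    2:{ intros i Hi. apply in_seq in Hi. rewrite rsum_map. apply coinv_genfun_first_letter; auto; lia. }
    rewrite Rmult_comm, <- rsum_scal.
    rewrite (rsum_ext _ _ (fun i => qfact t d * (t ^ sumN (skipn (S i) k) * qint t (nth i k 0%nat)))).
    + rewrite rsum_scal. rewrite <- Hl, qint_sumN_split, Hs, qfact_S. ring.
    + intros i Hi. destruct le_dec as [Hle|Hle].
      * rewrite (qfactv_decr t k i Hle). rewrite <- (IHd (decr k i)).
        ring. rewrite decr_length; auto. rewrite sumN_decr by auto; lia.
      * replace (nth i k 0%nat) with 0%nat by lia. rewrite qint_0. ring.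
Qed.

(** * The homomorphism [pi_q] *)

Definition pi_coef (q : CC) (a : word) : CC := Cpow (Cinv q) (inversions a).

Definition pi_q (q : CC) (n : nat) (f : Fcoef) : Ocoef := fun k =>
  csum (words n (sumN k)) (fun a => if list_eq_dec Nat.eq_dec (pvec n a) k then Cmul (pi_coef q a) (f a) else C0).

Lemma pi_q_badlen q n f k : length k <> n -> pi_q q n f k = C0.
Proof. intros H. unfold pi_q. apply csum_zero. intros a _. destruct list_eq_dec; auto.
  exfalso; apply H; rewrite <- e; apply pvec_length. Qed.

Lemma pi_q_add q n f g k : pi_q q n (Fadd f g) k = Oadd (pi_q q n f) (pi_q q n g) k.
Proof. unfold pi_q, Oadd. rewrite <- csum_add. apply csum_ext. intros a _.
  destruct list_eq_dec; unfold Fadd; Csolve. Qed.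

Lemma pi_q_scale q n c f k : pi_q q n (Fscale c f) k = Oscale c (pi_q q n f) k.
Proof. unfold pi_q, Oscale. rewrite <- csum_scal. apply csum_ext. intros a _.
  destruct list_eq_dec; unfold Fscale; Csolve. Qed.

Lemma Fsub_eq f g : Fsub f g = Fadd f (Fscale (Copp Defs.C1) g).
Proof. apply functional_extensionality; intros a. unfold Fsub, Fadd, Fscale. Csolve. Qed.

Lemma pi_q_sub q n f h k : pi_q q n (Fsub f h) k = Csub (pi_q q n f k) (pi_q q n h k).
Proof. rewrite Fsub_eq, pi_q_add. unfold Oadd. rewrite pi_q_scale. unfold Oscale, Csub. f_equal. Csolve. Qed.

Lemma pi_q_F1 q n k : pi_q q n F1 k = O1 n k.
Proof. unfold pi_q, O1. destruct (Nat.eq_dec (sumN k) 0) as [E|E].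
  - rewrite E. simpl. unfold csum; simpl. rewrite pvec_nil.
    destruct list_eq_dec as [E1|E1]; destruct list_eq_dec as [E2|E2]; try congruence.
    + unfold pi_coef; simpl. Csolve.
    + Csolve.
  - destruct list_eq_dec as [E2|E2].
    + exfalso; apply E. rewrite E2. apply sumN_repeat0.
    + apply csum_zero. intros a Ha. apply in_words in Ha as [Hl _].
      destruct a; simpl in Hl; [lia|]. destruct list_eq_dec; auto. simpl. apply Cmul_0_r. Qed.

Lemma pvec_single n i : (i < n)%nat -> pvec n [i] = map (fun j => if Nat.eq_dec j i then 1%nat else 0%nat) (seq 0 n).
Proof. intros H. unfold pvec. apply map_ext. intros j. simpl. destruct (Nat.eq_dec i j), (Nat.eq_dec j i); congruence. Qed.

Lemma pi_q_zeta q n i k : (i < n)%nat -> pi_q q n (zeta i) k = xgen n i k.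
Proof. intros Hi. unfold pi_q, xgen. rewrite <- pvec_single by auto.
  destruct list_eq_dec as [E|E].
  - subst k. rewrite (csum_single _ _ [i]).
    + destruct list_eq_dec; [|congruence]. unfold zeta. destruct list_eq_dec; [|congruence].
      unfold pi_coef; simpl. Csolve.
    + apply NoDup_words.
    + apply in_words. rewrite sumN_pvec. split; auto. repeat constructor; auto. repeat constructor; auto.
    + intros y _ Hy. destruct list_eq_dec; auto. unfold zeta. destruct list_eq_dec; [congruence|]. apply Cmul_0_r.
  - apply csum_zero. intros a _. destruct list_eq_dec as [E1|E1]; auto.
    unfold zeta. destruct list_eq_dec as [E2|E2]; [subst; congruence|]. apply Cmul_0_r. Qed.

Definition vsub (m k : list nat) : list nat := map (fun p => (fst p - snd p)%nat) (combine m k).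

Lemma in_below m k : In k (below m) <-> length k = length m /\ forall j, (nth j k 0 <= nth j m 0)%nat.
Proof.
  revert k; induction m as [|a m IH]; intros k; cbn [below].
  - split. intros [<-|[]]; split; auto; intros [|j]; simpl; lia.
    intros [H _]; destruct k; [left; auto|discriminate].
  - rewrite in_flat_map. split.
    + intros [j [Hj Hk]]. apply in_map_iff in Hk as [k' [<- Hk']]. apply IH in Hk' as [Hl Hn].
      apply in_seq in Hj. split; simpl; auto. intros [|j']; simpl; auto; lia.
    + intros [Hl Hn]. destruct k as [|j k']; [discriminate|]. exists j. split.
      apply in_seq. specialize (Hn 0%nat); simpl in Hn; lia.
      apply in_map, IH. split; simpl in Hl; auto. intros j'; apply (Hn (S j')).
Qed.

Lemma NoDup_below m : NoDup (below m).
Proof. induction m; cbn [below]. repeat constructor; auto. apply NoDup_flat_map_cons; auto. apply seq_NoDup. Qed.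

Lemma below_sum m k : In k (below m) -> (sumN k + sumN (vsub m k))%nat = sumN m.
Proof. revert k; induction m as [|a m IH]; intros k; cbn [below].
  - intros [<-|[]]; reflexivity.
  - rewrite in_flat_map. intros [j [Hj Hk]]. apply in_map_iff in Hk as [k' [<- Hk']].
    apply in_seq in Hj. specialize (IH k' Hk'). unfold vsub in *. simpl. lia. Qed.

Lemma vsub_length m k : length k = length m -> length (vsub m k) = length m.
Proof. intros H. unfold vsub. rewrite length_map, length_combine. lia. Qed.

Lemma nth_vsub m k j : length k = length m -> nth j (vsub m k) 0%nat = (nth j m 0 - nth j k 0)%nat.
Proof. intros H. unfold vsub. change 0%nat with ((fun p : nat * nat => (fst p - snd p)%nat) (0%nat, 0%nat)) at 1.
  rewrite map_nth, combine_nth by auto. reflexivity. Qed.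

Lemma nth_pvec_gen n a j : nth j (pvec n a) 0%nat = if lt_dec j n then count_occ Nat.eq_dec a j else 0%nat.
Proof. destruct lt_dec. apply nth_pvec; auto. apply nth_overflow. rewrite pvec_length; lia. Qed.

Lemma nth_pvec_app n b c j : nth j (pvec n (b ++ c)) 0%nat = (nth j (pvec n b) 0 + nth j (pvec n c) 0)%nat.
Proof. rewrite !nth_pvec_gen. destruct lt_dec; auto. apply count_occ_app. Qed.

Lemma below_indicator n m b c (Psi : list nat -> CC) :
  csum (below m) (fun k => if list_eq_dec Nat.eq_dec (pvec n b) k then
                              if list_eq_dec Nat.eq_dec (pvec n c) (vsub m k) then Psi k else C0 else C0) =
  if list_eq_dec Nat.eq_dec (pvec n (b ++ c)) m then Psi (pvec n b) else C0.
Proof.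
  destruct (list_eq_dec Nat.eq_dec (pvec n (b ++ c)) m) as [E|E].
  - assert (Hin : In (pvec n b) (below m)).
    { apply in_below. split. rewrite <- E, !pvec_length; auto.
      intros j. rewrite <- E, nth_pvec_app. lia. }
    rewrite (csum_single _ _ (pvec n b)); auto.
    + destruct list_eq_dec; [|congruence]. destruct list_eq_dec as [E2|E2]; auto. exfalso; apply E2.
      apply nth_ext with 0%nat 0%nat. rewrite vsub_length; rewrite <- E, !pvec_length; auto.
      intros j _. rewrite nth_vsub by (rewrite <- E, !pvec_length; auto). rewrite <- E, nth_pvec_app. lia.
    + apply NoDup_below.
    + intros y _ Hy. destruct list_eq_dec; congruence.
  - apply csum_zero. intros k Hk. destruct list_eq_dec as [E1|E1]; auto.
    destruct list_eq_dec as [E2|E2]; auto. exfalso; apply E.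
    apply in_below in Hk as [Hl Hle]. subst k.
    apply nth_ext with 0%nat 0%nat. rewrite !pvec_length in *; auto.
    intros j _. rewrite nth_pvec_app. rewrite E2. rewrite nth_vsub by auto. specialize (Hle j). lia.
Qed.

Lemma sumN_firstn_incr k x y : (y < length k)%nat ->
  sumN (firstn x (incr k y)) = (sumN (firstn x k) + if y <? x then 1 else 0)%nat.
Proof. revert x y; induction k; intros x y H; simpl in *; [lia|].
  destruct x, y; simpl; try lia.
  - rewrite IHk by lia. destruct (y <? x) eqn:E1, (S y <? S x) eqn:E2; simpl;
    apply Nat.ltb_lt in E1 || apply Nat.ltb_ge in E1; apply Nat.ltb_lt in E2 || apply Nat.ltb_ge in E2; lia. Qed.

Lemma sumN_firstn_repeat0 x n : sumN (firstn x (repeat 0%nat n)) = 0%nat.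
Proof. revert x; induction n; intros [|x]; simpl; auto. Qed.

Lemma count_lt_pvec n x c : valid_word n c ->
  length (filter (fun z => z <? x) c) = sumN (firstn x (pvec n c)).
Proof. induction c; intros Hv. rewrite pvec_nil, sumN_firstn_repeat0. reflexivity.
  inversion Hv; subst. rewrite pvec_cons by auto. rewrite sumN_firstn_incr by (rewrite pvec_length; auto).
  rewrite <- IHc by auto. cbn [filter]. destruct (a <? x); cbn [length]; lia. Qed.

Lemma cross_incr k l x : length k = length l -> (x < length k)%nat ->
  cross (incr k x) l = (cross k l + sumN (firstn x l))%nat.
Proof. revert l x; induction k; intros l x Hl Hx; destruct l; simpl in *; try lia.
  destruct x; simpl. lia. rewrite IHk by lia. rewrite sumN_incr by lia. lia. Qed.

Lemma inversions_app n b c : valid_word n b -> valid_word n c ->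
  inversions (b ++ c) = (inversions b + inversions c + cross (pvec n b) (pvec n c))%nat.
Proof. induction b; intros Hb Hc. simpl. rewrite pvec_nil.
  assert (forall l : list nat, cross (repeat 0%nat (length l)) l = 0%nat) as Hz.
  { intros l; induction l; simpl; auto. rewrite sumN_repeat0. lia. }
  rewrite <- (pvec_length n c) at 1. rewrite Hz. lia.
  inversion Hb; subst. cbn [app inversions]. rewrite IHb by auto.
  rewrite filter_app, length_app. rewrite pvec_cons by auto.
  rewrite cross_incr by (rewrite ?pvec_length; auto). rewrite (count_lt_pvec n a c) by auto. lia. Qed.

Lemma pi_coef_app q n b c : valid_word n b -> valid_word n c ->
  pi_coef q (b ++ c) = Cmul (Cpow (Cinv q) (cross (pvec n b) (pvec n c))) (Cmul (pi_coef q b) (pi_coef q c)).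
Proof. intros Hb Hc. unfold pi_coef. rewrite (inversions_app n) by auto. rewrite !Cpow_add.
  generalize (Cpow (Cinv q) (inversions b)), (Cpow (Cinv q) (inversions c)), (Cpow (Cinv q) (cross (pvec n b) (pvec n c))).
  intros x y z. Csolve. Qed.

Lemma csum_words_add n i j (F : word -> word -> CC) :
  csum (words n (i + j)) (fun w => F (firstn i w) (skipn i w)) =
  csum (words n i) (fun b => csum (words n j) (fun c => F b c)).
Proof. rewrite !csum_eq. f_equal.
  - rewrite (rsum_words_add n i j (fun b c => fst (F b c))). apply rsum_ext; intros; rewrite csum_eq; auto.
  - rewrite (rsum_words_add n i j (fun b c => snd (F b c))). apply rsum_ext; intros; rewrite csum_eq; auto. Qed.

Lemma Cmul_csum2 {A B} (l1 : list A) (l2 : list B) F G :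
  Cmul (csum l1 F) (csum l2 G) = csum l1 (fun b => csum l2 (fun c => Cmul (F b) (G c))).
Proof. rewrite Cmul_comm, <- csum_scal. apply csum_ext; intros.
  rewrite Cmul_comm, <- csum_scal. auto. Qed.

Definition concat_split_sum (q : CC) (n : nat) (f g : Fcoef) (m : list nat) : CC :=
  csum (seq 0 (S (sumN m))) (fun i => csum (words n i) (fun b => csum (words n (sumN m - i)) (fun c =>
    if list_eq_dec Nat.eq_dec (pvec n (b ++ c)) m
    then Cmul (pi_coef q (b ++ c)) (Cmul (f b) (g c)) else C0))).

Lemma pi_q_Fmul_split q n f g m : pi_q q n (Fmul f g) m = concat_split_sum q n f g m.
Proof.
  set (d := sumN m). unfold pi_q, Fmul, concat_split_sum. fold d.
  rewrite (csum_ext _ _ (fun a => csum (seq 0 (S d)) (fun i =>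
     if list_eq_dec Nat.eq_dec (pvec n a) m
     then Cmul (pi_coef q a) (Cmul (f (firstn i a)) (g (skipn i a))) else C0))).
  2:{ intros a Ha. apply in_words in Ha as [Hl _]. rewrite Hl. destruct list_eq_dec.
      - fold (csum (seq 0 (S d)) (fun i => Cmul (f (firstn i a)) (g (skipn i a)))). rewrite csum_scal; auto.
      - symmetry; apply csum_zero; auto. }
  rewrite csum_swap. apply csum_ext. intros i Hi. apply in_seq in Hi.
  replace (words n d) with (words n (i + (d - i))) by (f_equal; lia).
  rewrite <- (csum_words_add n i (d - i) (fun b c =>
      if list_eq_dec Nat.eq_dec (pvec n (b ++ c)) m then Cmul (pi_coef q (b ++ c)) (Cmul (f b) (g c)) else C0)).
  apply csum_ext. intros w _. rewrite firstn_skipn. reflexivity.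
Qed.

Definition Omul_summand (q : CC) (n : nat) (f g : Fcoef) (m k : list nat) (b c : word) : CC :=
  if list_eq_dec Nat.eq_dec (pvec n b) k then
    if list_eq_dec Nat.eq_dec (pvec n c) (vsub m k) then
      Cmul (Cmul (Cpow (Cinv q) (cross k (vsub m k))) (Cmul (pi_coef q b) (pi_coef q c))) (Cmul (f b) (g c))
    else C0 else C0.

Lemma Omul_term_split q n f g m k : In k (below m) ->
  Cmul (Cpowz q (- Z.of_nat (cross k (vsub m k)))) (Cmul (pi_q q n f k) (pi_q q n g (vsub m k))) =
  csum (seq 0 (S (sumN m))) (fun i => csum (words n i) (fun b =>
    csum (words n (sumN m - i)) (fun c => Omul_summand q n f g m k b c))).
Proof.
  intros Hk. rewrite Cpowz_neg. unfold pi_q. rewrite Cmul_csum2, <- csum_scal.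
  pose proof (below_sum m k Hk) as Hs.
  rewrite (csum_single (seq 0 (S (sumN m))) _ (sumN k)).
  - replace (sumN m - sumN k)%nat with (sumN (vsub m k)) by lia.
    apply csum_ext. intros b Hb. rewrite <- csum_scal. apply csum_ext. intros c Hc.
    unfold Omul_summand. destruct list_eq_dec; destruct list_eq_dec;
      try (rewrite ?Cmul_0_l, ?Cmul_0_r; reflexivity).
    generalize (Cpow (Cinv q) (cross k (vsub m k))), (pi_coef q b), (pi_coef q c), (f b), (g c). intros; Csolve.
  - apply seq_NoDup.
  - apply in_seq. lia.
  - intros i _ Hi. apply csum_zero. intros b Hb. apply csum_zero. intros c _.
    unfold Omul_summand. destruct list_eq_dec as [E|E]; auto. exfalso. apply in_words in Hb as [Hl Hv].
    apply Hi. rewrite <- Hl, <- E. symmetry; apply sumN_pvec; auto.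
Qed.

Lemma Omul_pi_q_split q n f g m :
  Omul q (pi_q q n f) (pi_q q n g) m = concat_split_sum q n f g m.
Proof.
  unfold Omul. fold (vsub m). change (Csum (map ?F (below m))) with (csum (below m) F).
  rewrite (csum_ext (below m) _ (fun k => csum (seq 0 (S (sumN m))) (fun i => csum (words n i) (fun b =>
    csum (words n (sumN m - i)) (fun c => Omul_summand q n f g m k b c)))))
    by (intros k Hk; apply Omul_term_split; auto).
  rewrite csum_swap. unfold concat_split_sum. apply csum_ext. intros i _.
  rewrite (csum_swap (below m)). apply csum_ext. intros b Hb.
  rewrite (csum_swap (below m)). apply csum_ext. intros c Hc.
  apply in_words in Hb as [_ Hb]. apply in_words in Hc as [_ Hc].
  unfold Omul_summand. rewrite (below_indicator n m b c (fun k =>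
     Cmul (Cmul (Cpow (Cinv q) (cross k (vsub m k))) (Cmul (pi_coef q b) (pi_coef q c))) (Cmul (f b) (g c)))).
  destruct list_eq_dec as [E|E]; auto.
  rewrite (pi_coef_app q n) by auto.
  replace (vsub m (pvec n b)) with (pvec n c); auto.
  apply nth_ext with 0%nat 0%nat. rewrite vsub_length; rewrite <- E, !pvec_length; auto.
  intros j _. rewrite nth_vsub by (rewrite <- E, !pvec_length; auto). rewrite <- E, nth_pvec_app. lia.
Qed.

Lemma pi_q_mul q n f g m : pi_q q n (Fmul f g) m = Omul q (pi_q q n f) (pi_q q n g) m.
Proof. rewrite pi_q_Fmul_split, Omul_pi_q_split. reflexivity. Qed.

(** * Series and the norms of [F] *)

Lemma series_val_eq u l : Un_cv (fun N => sum_f_R0 u N) l -> series_val u = l.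
Proof. intros H. unfold series_val.
  apply UL_sequence with (fun N => sum_f_R0 u N); auto.
  apply epsilon_spec. exists l; auto. Qed.

Lemma series_val_spec u : series_conv u -> Un_cv (fun N => sum_f_R0 u N) (series_val u).
Proof. intros [l H]. rewrite (series_val_eq u l H); auto. Qed.

Lemma series_comp u v : (forall d, 0 <= u d <= v d) -> series_conv v ->
  series_conv u /\ series_val u <= series_val v.
Proof. intros H Hv. pose proof (series_val_spec v Hv) as Hv'.
  destruct (Rseries_CV_comp u v H (exist _ _ Hv')) as [l Hl].
  split. exists l; auto. rewrite (series_val_eq u l Hl).
  eapply Rle_cv_lim; [|apply Hl|apply Hv']. intros N. apply sum_Rle. intros; apply H. Qed.

Lemma sum_scal_l (u : nat -> R) K N : sum_f_R0 (fun d => K * u d) N = K * sum_f_R0 u N.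
Proof. induction N; simpl; [ring|]. rewrite IHN; ring. Qed.

Lemma series_scal u K : series_conv u -> series_conv (fun d => K * u d) /\ series_val (fun d => K * u d) = K * series_val u.
Proof. intros Hu. pose proof (series_val_spec u Hu) as H.
  assert (Hk : Un_cv (fun _ => K) K) by (intros eps He; exists 0%nat; intros; unfold Rdist; rewrite Rminus_diag, Rabs_R0; auto).
  pose proof (CV_mult _ _ _ _ Hk H) as H2.
  assert (Un_cv (fun N => sum_f_R0 (fun d => K * u d) N) (K * series_val u)).
  { intros eps He. destruct (H2 eps He) as [N HN]. exists N. intros m Hm. rewrite sum_scal_l. apply HN; auto. }
  split. exists (K * series_val u); auto. apply series_val_eq; auto. Qed.

Lemma series_plus u v : series_conv u -> series_conv v ->
  series_conv (fun d => u d + v d) /\ series_val (fun d => u d + v d) = series_val u + series_val v.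
Proof. intros Hu Hv. pose proof (CV_plus _ _ _ _ (series_val_spec u Hu) (series_val_spec v Hv)) as H.
  assert (Un_cv (fun N => sum_f_R0 (fun d => u d + v d) N) (series_val u + series_val v)).
  { intros eps He. destruct (H eps He) as [N HN]. exists N. intros m Hm. rewrite sum_plus. apply HN; auto. }
  split. eexists; eauto. apply series_val_eq; auto. Qed.

Lemma series_ext u v : (forall d, u d = v d) -> series_val u = series_val v.
Proof. intros H. assert (u = v) by (apply functional_extensionality_dep; auto). subst; auto. Qed.
Lemma series_conv_ext u v : (forall d, u d = v d) -> series_conv u -> series_conv v.
Proof. intros H. assert (u = v) by (apply functional_extensionality_dep; auto). subst; auto. Qed.

Lemma series_term_le u d : (forall d, 0 <= u d) -> series_conv u -> u d <= series_val u.
Proof. intros H Hu. apply Rle_trans with (sum_f_R0 u d).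
  destruct d. simpl; lra. simpl. pose proof (cond_pos_sum u d H). lra.
  apply sum_incr; auto. apply series_val_spec; auto. Qed.

Lemma series_zero_conv u : (forall d, u d = 0) -> series_conv u /\ series_val u = 0.
Proof. intros H. assert (Un_cv (fun N => sum_f_R0 u N) 0).
  { intros eps He; exists 0%nat; intros m _. unfold Rdist.
    replace (sum_f_R0 u m) with 0. rewrite Rminus_0_r, Rabs_R0; auto.
    induction m; simpl; rewrite H; [lra|]. rewrite <- IHm; lra. }
  split. exists 0; auto. apply series_val_eq; auto. Qed.

Lemma series_finite u N : (forall d, (N < d)%nat -> u d = 0) -> series_conv u.
Proof. intros H. exists (sum_f_R0 u N). intros eps He. exists N. intros m Hm. unfold Rdist.
  replace (sum_f_R0 u m) with (sum_f_R0 u N). rewrite Rminus_diag, Rabs_R0; auto.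
  induction Hm; auto. simpl. rewrite H by lia. lra. Qed.

Lemma series_tail u N : series_conv u ->
  series_conv (fun d => if le_lt_dec d N then 0 else u d) /\
  series_val (fun d => if le_lt_dec d N then 0 else u d) = series_val u - sum_f_R0 u N.
Proof. intros Hu. pose proof (series_val_spec u Hu) as H.
  assert (Un_cv (fun M => sum_f_R0 (fun d => if le_lt_dec d N then 0 else u d) M) (series_val u - sum_f_R0 u N)).
  { intros eps He. destruct (H eps He) as [M HM]. exists (max M N). intros m Hm.
    replace (sum_f_R0 (fun d => if le_lt_dec d N then 0 else u d) m) with (sum_f_R0 u m - sum_f_R0 u N).
    unfold Rdist. replace (sum_f_R0 u m - sum_f_R0 u N - (series_val u - sum_f_R0 u N)) with (sum_f_R0 u m - series_val u) by ring.
    apply HM; lia.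
    assert (N <= m)%nat by lia. clear -H0. induction H0.
    - rewrite Rminus_diag. assert (forall M, (M <= N)%nat -> sum_f_R0 (fun d => if le_lt_dec d N then 0 else u d) M = 0).
      { induction M; intros HM; cbn [sum_f_R0]. destruct (le_lt_dec 0 N); [lra|lia].
        rewrite IHM by lia. destruct (le_lt_dec (S M) N); [lra|lia]. }
      rewrite H; auto.
    - cbn [sum_f_R0]. rewrite <- IHle. destruct (le_lt_dec (S m) N); [lia|]. ring. }
  split. eexists; eauto. apply series_val_eq; auto. Qed.

Lemma tail_to_zero u : series_conv u -> Un_cv (fun N => series_val u - sum_f_R0 u N) 0.
Proof. intros Hu. pose proof (series_val_spec u Hu) as H. intros eps He. destruct (H eps He) as [M HM].
  exists M. intros m Hm. unfold Rdist. rewrite Rminus_0_r. rewrite Rabs_minus_sym. apply HM; auto. Qed.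

Lemma cauchy_prod_conv a b : (forall d, 0 <= a d) -> (forall d, 0 <= b d) ->
  series_conv a -> series_conv b ->
  series_conv (fun d => sum_f_R0 (fun i => a i * b (d - i)%nat) d).
Proof. intros Ha Hb Hca Hcb. pose proof (series_val_spec a Hca) as HA. pose proof (series_val_spec b Hcb) as HB.
  set (c := fun d => sum_f_R0 (fun i => a i * b (d - i)%nat) d).
  assert (Hc : forall d, 0 <= c d). { intros d; apply cond_pos_sum; intros; apply Rmult_le_pos; auto. }
  assert (Hle : forall N, sum_f_R0 c N <= series_val a * series_val b).
  { intros N. apply Rle_trans with (sum_f_R0 a N * sum_f_R0 b N).
    - destruct N. unfold c; simpl. lra.
      rewrite (cauchy_finite a b (S N)) by lia. unfold c.
      match goal with |- _ <= _ + ?X => assert (0 <= X) end.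
      { apply cond_pos_sum. intros; apply cond_pos_sum; intros; apply Rmult_le_pos; auto. }
      lra.
    - apply Rmult_le_compat; try (apply cond_pos_sum; auto); apply sum_incr; auto. }
  destruct (growing_cv (fun N => sum_f_R0 c N)) as [l Hl].
  - intros N. simpl. pose proof (Hc (S N)). lra.
  - exists (series_val a * series_val b). intros x [N ->]. auto.
  - exists l; auto. Qed.

Lemma cauchy_schwarz_rsum {A} (l : list A) (u v : A -> R) :
  (rsum l (fun x => u x * v x)) ^ 2 <= rsum l (fun x => u x ^ 2) * rsum l (fun x => v x ^ 2).
Proof. induction l. unfold rsum; simpl; lra.
  rewrite !rsum_cons. set (C := rsum l (fun x => u x * v x)) in *.
  set (P := rsum l (fun x => u x ^ 2)) in *. set (Q := rsum l (fun x => v x ^ 2)) in *.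
  assert (0 <= P) by (apply rsum_nonneg; intros; apply pow2_ge_0).
  assert (0 <= Q) by (apply rsum_nonneg; intros; apply pow2_ge_0).
  set (x := u a) in *. set (y := v a) in *.
  assert (0 <= x ^ 2 * Q + y ^ 2 * P - 2 * x * y * C).
  { destruct (Req_dec P 0) as [HP|HP].
    - assert (HC : C = 0). { assert (C ^ 2 <= 0) by (rewrite HP in IHl; lra). nra. }
      rewrite HP, HC. nra.
    - assert (0 < P) by lra.
      assert (E : P * (x ^ 2 * Q + y ^ 2 * P - 2 * x * y * C) = (y * P - x * C) ^ 2 + x ^ 2 * (P * Q - C ^ 2)) by ring.
      assert (0 <= P * (x ^ 2 * Q + y ^ 2 * P - 2 * x * y * C)).
      { rewrite E. apply Rplus_le_le_0_compat. apply pow2_ge_0. apply Rmult_le_pos. apply pow2_ge_0. lra. }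
      apply Rmult_le_reg_l with P; auto. lra. }
  nra. Qed.

Lemma sum_sqrt_le {A} (l : list A) (u : A -> R) : (forall x, In x l -> 0 <= u x) ->
  rsum l (fun x => sqrt (u x)) <= sqrt (INR (length l)) * sqrt (rsum l u).
Proof. intros H. rewrite <- sqrt_mult_alt by apply pos_INR.
  apply Rsqr_incr_0.
  - rewrite Rsqr_sqrt. 2:{ apply Rmult_le_pos. apply pos_INR. apply rsum_nonneg; auto. }
    unfold Rsqr. pose proof (cauchy_schwarz_rsum l (fun _ => 1) (fun x => sqrt (u x))) as HC.
    simpl in HC.
    rewrite (rsum_ext l (fun x => 1 * sqrt (u x)) (fun x => sqrt (u x))) in HC by (intros; ring).
    rewrite (rsum_ext l (fun x => sqrt (u x) * (sqrt (u x) * 1)) u) in HC by (intros; rewrite Rmult_1_r; apply sqrt_sqrt; auto).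
    rewrite (rsum_ext l (fun _ => 1 * (1 * 1)) (fun _ => 1)) in HC by (intros; ring).
    replace (rsum l (fun _ => 1)) with (INR (length l)) in HC. lra.
    clear. induction l. reflexivity. cbn [length]. rewrite S_INR, rsum_cons, IHl. ring.
  - apply rsum_nonneg. intros; apply sqrt_pos.
  - apply sqrt_pos. Qed.

Lemma sumsq_le_sq {A} (l : list A) (u : A -> R) : (forall x, In x l -> 0 <= u x) ->
  rsum l (fun x => u x ^ 2) <= (rsum l u) ^ 2.
Proof. induction l; intros H. unfold rsum; simpl; lra. rewrite !rsum_cons.
  assert (0 <= u a) by (apply H; left; auto). assert (0 <= rsum l u) by (apply rsum_nonneg; intros; apply H; right; auto).
  assert (rsum l (fun x => u x ^ 2) <= rsum l u ^ 2) by (apply IHl; intros; apply H; right; auto). nra. Qed.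

Lemma pow_le_1 x d : 0 <= x <= 1 -> x ^ d <= 1.
Proof. intros H. induction d; simpl; [lra|]. assert (0 <= x ^ d) by (apply pow_le; lra). nra. Qed.

Lemma lin_geom_bound x : 0 < x < 1 -> exists K, 0 <= K /\ forall d, (INR d + 1) * x ^ d <= K.
Proof. intros [H0 H1]. set (h := / x - 1). assert (Hh : 0 < h).
  { unfold h. assert (1 < / x). { rewrite <- Rinv_1. apply Rinv_lt_contravar; lra. } lra. }
  exists (1 + / h). split. assert (0 < / h) by (apply Rinv_0_lt_compat; auto). lra.
  intros d. assert (x = / (1 + h)) by (unfold h; field; lra).
  rewrite H, pow_inv. pose proof (poly d h Hh).
  assert (0 < 1 + INR d * h) by (pose proof (pos_INR d); nra).
  apply Rle_trans with ((INR d + 1) * / (1 + INR d * h)).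
  - apply Rmult_le_compat_l. pose proof (pos_INR d); lra. apply Rinv_le_contravar; auto.
  - apply Rmult_le_reg_r with (1 + INR d * h); auto. rewrite Rmult_assoc, Rinv_l by lra.
    pose proof (pos_INR d). assert (/ h * h = 1) by (field; lra).
    assert (0 < / h) by (apply Rinv_0_lt_compat; auto). nra. Qed.

Lemma poly_geom_bound n x : 0 < x < 1 -> exists K, 0 <= K /\ forall d, (INR d + 1) ^ n * x ^ d <= K.
Proof. revert x. induction n; intros x Hx.
  - exists 1. split; [lra|]. intros d. simpl. rewrite Rmult_1_l. apply pow_le_1; lra.
  - assert (Hs : 0 < sqrt x < 1).
    { split. apply sqrt_lt_R0; lra. rewrite <- sqrt_1. apply sqrt_lt_1; lra. }
    destruct (IHn (sqrt x) Hs) as [K1 [HK1 H1]]. destruct (lin_geom_bound (sqrt x) Hs) as [K2 [HK2 H2]].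
    exists (K1 * K2). split. apply Rmult_le_pos; auto. intros d.
    replace ((INR d + 1) ^ S n * x ^ d) with (((INR d + 1) ^ n * sqrt x ^ d) * ((INR d + 1) * sqrt x ^ d)).
    + apply Rmult_le_compat; auto.
      apply Rmult_le_pos. apply pow_le; pose proof (pos_INR d); lra. apply pow_le; lra.
      apply Rmult_le_pos. pose proof (pos_INR d); lra. apply pow_le; lra.
    + simpl. replace (x ^ d) with (sqrt x ^ d * sqrt x ^ d). ring.
      rewrite <- Rpow_mult_distr, sqrt_sqrt; lra. Qed.

Lemma length_flat_map_le {A B} (f : A -> list B) l m : (forall x, In x l -> (length (f x) <= m)%nat) ->
  (length (flat_map f l) <= length l * m)%nat.
Proof. induction l; intros H; simpl; auto. rewrite length_app.
  pose proof (H a (or_introl eq_refl)). pose proof (IHl (fun x Hx => H x (or_intror Hx))). lia. Qed.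

Lemma mindices_count n d : (length (mindices n d) <= (S d) ^ n)%nat.
Proof. revert d; induction n; intros d. simpl; destruct d; simpl; lia.
  cbn [mindices]. eapply Nat.le_trans. apply length_flat_map_le with (m := (S d ^ n)%nat).
  - intros j Hj. apply in_seq in Hj. rewrite length_map. eapply Nat.le_trans. apply IHn.
    apply Nat.pow_le_mono_l. lia.
  - rewrite length_seq. simpl. lia. Qed.

Lemma mindices_count_R n d : INR (length (mindices n d)) <= (INR d + 1) ^ n.
Proof. replace (INR d + 1) with (INR (S d)) by (rewrite S_INR; ring). rewrite <- pow_INR.
  apply le_INR, mindices_count. Qed.

Lemma mindices_sqrt_bound n x : 0 < x < 1 -> exists K, 0 <= K /\
  forall d, sqrt (INR (length (mindices n d))) * x ^ d <= K.
Proof. intros Hx. destruct (poly_geom_bound n x Hx) as [K [HK H]]. exists (K + 1). split. lra.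
  intros d. apply Rle_trans with ((1 + (INR d + 1) ^ n) * x ^ d).
  - apply Rmult_le_compat_r. apply pow_le; lra.
    set (m := INR (length (mindices n d))). pose proof (mindices_count_R n d). fold m in H0.
    assert (0 <= m) by apply pos_INR. assert (sqrt m <= 1 + m).
    { destruct (Rle_dec m 1). assert (sqrt m <= 1) by (rewrite <- sqrt_1; apply sqrt_le_1_alt; auto). lra.
      assert (sqrt m <= m).
      { rewrite <- (sqrt_sqrt m) at 2 by lra.
        assert (1 <= sqrt m) by (rewrite <- sqrt_1; apply sqrt_le_1_alt; lra). nra. }
      lra. }
    lra.
  - rewrite Rmult_plus_distr_r, Rmult_1_l. pose proof (H d). assert (x ^ d <= 1) by (apply pow_le_1; lra). lra. Qed.

Lemma rho_in_larger r rho : rho_in r rho -> exists rho', rho_in r rho' /\ rho < rho'.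
Proof. intros [H0 H1]. destruct r as [r0|].
  - exists ((rho + r0) / 2). split; [split|]; lra.
  - exists (rho + 1). split; [split; auto|]; lra. Qed.

Definition deg_norm (n : nat) (f : Fcoef) (d : nat) : R := sqrt (rsum (words n d) (fun a => Cmod (f a) ^ 2)).
Definition fiber_sqnorm (n : nat) (f : Fcoef) (k : list nat) : R :=
  rsum (words n (sumN k)) (fun a => if list_eq_dec Nat.eq_dec (pvec n a) k then Cmod (f a) ^ 2 else 0).

Lemma Fterm_eq n f rho d : Fterm n f rho d = deg_norm n f d * rho ^ d.
Proof. reflexivity. Qed.

Lemma fiber_sqnorm_nonneg n f k : 0 <= fiber_sqnorm n f k.
Proof. apply rsum_nonneg; intros; destruct list_eq_dec; [apply pow2_ge_0|lra]. Qed.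

Lemma deg_norm_nonneg n f d : 0 <= deg_norm n f d.
Proof. apply sqrt_pos. Qed.

Lemma Fterm_circ_eq n f rho d :
  Fterm_circ n f rho d = rsum (mindices n d) (fun k => sqrt (fiber_sqnorm n f k)) * rho ^ d.
Proof. unfold Fterm_circ. f_equal. fold (rsum (mindices n d) (fun k =>
     sqrt (sumR (map (fun a => Cmod (f a) ^ 2)
        (filter (fun a => if list_eq_dec Nat.eq_dec (pvec n a) k then true else false) (words n d)))))).
  apply rsum_ext. intros k Hk. apply in_mindices in Hk as [_ Hs]. unfold fiber_sqnorm. rewrite Hs.
  rewrite rsum_filter. f_equal. apply rsum_ext; intros. destruct list_eq_dec; auto. Qed.

Lemma deg_norm_partition n f d :
  rsum (words n d) (fun a => Cmod (f a) ^ 2) = rsum (mindices n d) (fun k => fiber_sqnorm n f k).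
Proof. rewrite rsum_words_by_pvec. apply rsum_ext. intros k Hk. apply in_mindices in Hk as [_ Hs].
  unfold fiber_sqnorm; rewrite Hs; auto. Qed.

Lemma rsum_sqrt_fiber_le n f d : rsum (mindices n d) (fun k => sqrt (fiber_sqnorm n f k)) <=
  sqrt (INR (length (mindices n d))) * deg_norm n f d.
Proof. unfold deg_norm. rewrite deg_norm_partition. apply sum_sqrt_le. intros; apply fiber_sqnorm_nonneg. Qed.

Lemma rsum_mul_le_sqrt {A} (l : list A) (u v : A -> R) :
  rsum l (fun x => u x * v x) <= sqrt (rsum l (fun x => u x ^ 2)) * sqrt (rsum l (fun x => v x ^ 2)).
Proof. pose proof (cauchy_schwarz_rsum l u v).
  assert (0 <= rsum l (fun x => u x ^ 2)) by (apply rsum_nonneg; intros; apply pow2_ge_0).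
  assert (0 <= rsum l (fun x => v x ^ 2)) by (apply rsum_nonneg; intros; apply pow2_ge_0).
  rewrite <- sqrt_mult by auto. destruct (Rle_dec (rsum l (fun x => u x * v x)) 0).
  - pose proof (sqrt_pos (rsum l (fun x => u x ^ 2) * rsum l (fun x => v x ^ 2))). lra.
  - rewrite <- (sqrt_pow2 (rsum l (fun x => u x * v x))) by lra. apply sqrt_le_1_alt. auto. Qed.

Lemma sqrt_rsum_minkowski {A} (l : list A) (p u v : A -> R) :
  (forall x, In x l -> 0 <= p x <= (u x + v x) ^ 2) ->
  sqrt (rsum l p) <= sqrt (rsum l (fun x => u x ^ 2)) + sqrt (rsum l (fun x => v x ^ 2)).
Proof. intros H. set (U := rsum l (fun x => u x ^ 2)). set (V := rsum l (fun x => v x ^ 2)).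
  assert (0 <= U) by (apply rsum_nonneg; intros; apply pow2_ge_0).
  assert (0 <= V) by (apply rsum_nonneg; intros; apply pow2_ge_0).
  assert (rsum l p <= U + V + 2 * (sqrt U * sqrt V)).
  { apply Rle_trans with (rsum l (fun x => u x ^ 2 + v x ^ 2 + 2 * (u x * v x))).
    apply rsum_le; intros x Hx. specialize (H x Hx). replace (u x ^ 2 + v x ^ 2 + 2 * (u x * v x)) with ((u x + v x) ^ 2) by ring. lra.
    rewrite !rsum_plus, rsum_scal. pose proof (rsum_mul_le_sqrt l u v). fold U V in H2 |- *. lra. }
  rewrite <- (sqrt_pow2 (sqrt U + sqrt V)) by (pose proof (sqrt_pos U); pose proof (sqrt_pos V); lra).
  apply sqrt_le_1_alt. replace ((sqrt U + sqrt V) ^ 2) with (sqrt U * sqrt U + sqrt V * sqrt V + 2 * (sqrt U * sqrt V)) by ring.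
  rewrite !sqrt_sqrt by auto. lra. Qed.

Lemma deg_norm_add n f g d : deg_norm n (Fadd f g) d <= deg_norm n f d + deg_norm n g d.
Proof. unfold deg_norm. apply sqrt_rsum_minkowski. intros x _. split. apply pow2_ge_0. apply Cmod_add_sq. Qed.

Lemma deg_norm_scale n c f d : deg_norm n (Fscale c f) d = Cmod c * deg_norm n f d.
Proof. unfold deg_norm, Fscale. rewrite (rsum_ext _ _ (fun a => Cmod c ^ 2 * Cmod (f a) ^ 2)).
  rewrite rsum_scal, sqrt_mult, sqrt_pow2; auto. apply Cmod_ge0. apply pow2_ge_0.
  apply rsum_nonneg; intros; apply pow2_ge_0.
  intros; rewrite Cmod_mul; ring. Qed.

Lemma sqrt_rsum_Cmod_csum_le (I : list nat) (W : list word) (h : nat -> word -> CC) :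
  sqrt (rsum W (fun w => Cmod (csum I (fun i => h i w)) ^ 2)) <=
  rsum I (fun i => sqrt (rsum W (fun w => Cmod (h i w) ^ 2))).
Proof. induction I.
  - rewrite rsum_nil. rewrite rsum_zero. rewrite sqrt_0; lra. intros; unfold csum; simpl. rewrite Cmod_C0; ring.
  - rewrite rsum_cons. eapply Rle_trans. apply (sqrt_rsum_minkowski W _ (fun w => Cmod (h a w)) (fun w => Cmod (csum I (fun i => h i w)))).
    + intros w _. split. apply pow2_ge_0. rewrite csum_cons. apply Cmod_add_sq.
    + lra. Qed.

Lemma deg_norm_mul n g f d : deg_norm n (Fmul g f) d <= sum_f_R0 (fun i => deg_norm n g i * deg_norm n f (d - i)) d.
Proof. unfold deg_norm at 1. unfold Fmul.
  rewrite (rsum_ext _ _ (fun w => Cmod (csum (seq 0 (S d)) (fun i => Cmul (g (firstn i w)) (f (skipn i w)))) ^ 2)).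
  2:{ intros w Hw. apply in_words in Hw as [Hl _]. rewrite Hl. reflexivity. }
  eapply Rle_trans. apply sqrt_rsum_Cmod_csum_le. rewrite <- rsum_seq_sum. apply Req_le. apply rsum_ext.
  intros i Hi. apply in_seq in Hi. unfold deg_norm.
  replace (words n d) with (words n (i + (d - i))) by (f_equal; lia).
  rewrite (rsum_words_add n i (d - i) (fun b c => Cmod (Cmul (g b) (f c)) ^ 2)).
  rewrite (rsum_ext _ _ (fun b => Cmod (g b) ^ 2 * rsum (words n (d - i)) (fun c => Cmod (f c) ^ 2))).
  - rewrite <- sqrt_mult. f_equal. rewrite Rmult_comm, <- rsum_scal. apply rsum_ext; intros. ring.
    apply rsum_nonneg; intros; apply pow2_ge_0. apply rsum_nonneg; intros; apply pow2_ge_0.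
  - intros b _. rewrite <- rsum_scal. apply rsum_ext; intros. rewrite Cmod_mul. ring. Qed.

Lemma Fterm_nonneg n f rho d : 0 <= rho -> 0 <= Fterm n f rho d.
Proof. intros H. rewrite Fterm_eq. apply Rmult_le_pos. apply deg_norm_nonneg. apply pow_le; auto. Qed.

Lemma inF_add n r f g : inF n r f -> inF n r g -> inF n r (Fadd f g).
Proof. intros [Hf1 Hf2] [Hg1 Hg2]. split.
  - intros a Ha. unfold Fadd. rewrite Hf1, Hg1 by auto. Csolve.
  - intros rho Hr. assert (0 <= rho) by (destruct Hr; lra).
    destruct (series_plus _ _ (Hf2 rho Hr) (Hg2 rho Hr)) as [Hc _].
    refine (proj1 (series_comp (Fterm n (Fadd f g) rho) (fun d => Fterm n f rho d + Fterm n g rho d) _ Hc)).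
    intros d. split. apply Fterm_nonneg; auto.
    rewrite !Fterm_eq. pose proof (deg_norm_add n f g d). pose proof (pow_le rho d H). nra. Qed.

Lemma inF_scale n r c f : inF n r f -> inF n r (Fscale c f).
Proof. intros [Hf1 Hf2]. split.
  - intros a Ha. unfold Fscale. rewrite Hf1 by auto. apply Cmul_0_r.
  - intros rho Hr. assert (0 <= rho) by (destruct Hr; lra).
    destruct (series_scal _ (Cmod c) (Hf2 rho Hr)) as [Hc _].
    apply (series_conv_ext (fun d => Cmod c * Fterm n f rho d)); auto.
    intros d. rewrite !Fterm_eq, deg_norm_scale. ring. Qed.

Lemma inF_sub n r f g : inF n r f -> inF n r g -> inF n r (Fsub f g).
Proof. intros. rewrite Fsub_eq. apply inF_add; auto. apply inF_scale; auto. Qed.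

Lemma inF_F0 n r : inF n r F0.
Proof. split. auto. intros rho _. apply (series_zero_conv (Fterm n F0 rho)).
  intros d. rewrite Fterm_eq. unfold deg_norm, F0. rewrite rsum_zero. rewrite sqrt_0; ring.
  intros; rewrite Cmod_C0; ring. Qed.

Lemma inF_mul n r g f : inF n r g -> inF n r f -> inF n r (Fmul g f).
Proof. intros [Hg1 Hg2] [Hf1 Hf2]. split.
  - intros a Ha. unfold Fmul. apply csum_zero. intros i _.
    assert (~ valid_word n (firstn i a) \/ ~ valid_word n (skipn i a)).
    { destruct (classic (valid_word n (firstn i a))) as [H1|H1]; auto. right. intros H2. apply Ha.
      rewrite <- (firstn_skipn i a). unfold valid_word in *. apply Forall_app; auto. }
    destruct H as [H|H]; [rewrite Hg1 by auto; apply Cmul_0_l|rewrite Hf1 by auto; apply Cmul_0_r].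
  - intros rho Hr. assert (0 <= rho) by (destruct Hr; lra).
    pose proof (cauchy_prod_conv (Fterm n g rho) (Fterm n f rho) (fun d => Fterm_nonneg n g rho d H)
       (fun d => Fterm_nonneg n f rho d H) (Hg2 rho Hr) (Hf2 rho Hr)) as Hc.
    refine (proj1 (series_comp _ _ _ Hc)). intros d. split. apply Fterm_nonneg; auto.
    rewrite Fterm_eq. eapply Rle_trans. apply Rmult_le_compat_r. apply pow_le; auto. apply deg_norm_mul.
    rewrite Rmult_comm, <- sum_scal_l. apply sum_Rle. intros i Hi. rewrite !Fterm_eq.
    replace (rho ^ d) with (rho ^ i * rho ^ (d - i)) by (rewrite <- pow_add; f_equal; lia). lra. Qed.

Definition Fword (a : word) : Fcoef := fun b => if list_eq_dec Nat.eq_dec b a then Defs.C1 else C0.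

Lemma inF_Fword n r a : valid_word n a -> inF n r (Fword a).
Proof. intros Hv. split.
  - intros b Hb. unfold Fword. destruct list_eq_dec; auto. subst; contradiction.
  - intros rho _. apply (series_finite _ (length a)). intros d Hd. rewrite Fterm_eq. unfold deg_norm.
    rewrite rsum_zero. rewrite sqrt_0; ring. intros b Hb. apply in_words in Hb as [Hl _].
    unfold Fword. destruct list_eq_dec. subst; lia. rewrite Cmod_C0; ring. Qed.

(** * Fibrewise geometry: the lift and the projection onto the kernel *)

Definition qabs2 (q : CC) : R := Cmod q ^ 2.

Lemma qabs2_pos q : q <> C0 -> 0 < qabs2 q.
Proof. intros H; unfold qabs2; apply pow_lt, Cmod_pos; auto. Qed.

Lemma Oweight_sq q k : q <> C0 ->
  Oweight q k ^ 2 = qfactv (qabs2 q) k / qfact (qabs2 q) (sumN k) * qabs2 q ^ pairsum k.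
Proof. intros Hq. unfold Oweight, u_q, qabs2. rewrite Rpow_mult_distr. rewrite pow2_sqrt.
  rewrite <- !pow_mult. replace (pairsum k * 2)%nat with (2 * pairsum k)%nat by lia. reflexivity.
  pose proof (qabs2_pos q Hq). unfold qabs2 in H.
  apply Rmult_le_pos. left; apply qfactv_pos; auto. left; apply Rinv_0_lt_compat, qfact_pos; auto. Qed.

Lemma Oweight_pos q k : q <> C0 -> 0 < Oweight q k.
Proof. intros Hq. unfold Oweight, u_q. pose proof (qabs2_pos q Hq). unfold qabs2 in H.
  apply Rmult_lt_0_compat. apply sqrt_lt_R0. apply Rdiv_lt_0_compat. apply qfactv_pos; auto. apply qfact_pos; auto.
  apply pow_lt, Cmod_pos; auto. Qed.

Definition pi_coef_sqnorm (q : CC) (n : nat) (k : list nat) : R :=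
  rsum (words n (sumN k)) (fun a => if list_eq_dec Nat.eq_dec (pvec n a) k then Cmod (pi_coef q a) ^ 2 else 0).

Lemma Oweight_sq_pi_coef_sqnorm q n k : q <> C0 -> length k = n -> Oweight q k ^ 2 * pi_coef_sqnorm q n k = 1.
Proof. intros Hq Hl. pose proof (qabs2_pos q Hq) as Ht.
  rewrite Oweight_sq by auto. unfold pi_coef_sqnorm.
  match goal with |- ?c * rsum ?l ?F = _ => rewrite <- (rsum_scal l c F) end.
  rewrite (rsum_ext _ _ (fun a => (qfactv (qabs2 q) k / qfact (qabs2 q) (sumN k)) *
            (if list_eq_dec Nat.eq_dec (pvec n a) k then qabs2 q ^ coinversions a else 0))).
  - rewrite rsum_scal. fold (coinv_genfun n (qabs2 q) k).
    pose proof (coinv_genfun_qmultinomial n (qabs2 q) Ht (sumN k) k Hl eq_refl).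
    pose proof (qfact_pos (qabs2 q) (sumN k) Ht). field_simplify_eq; [|lra]. lra.
  - intros a Ha. apply in_words in Ha as [_ Hv]. destruct list_eq_dec as [E|E]; [|ring].
    unfold pi_coef. rewrite Cmod_pow, Cmod_Cinv by auto. rewrite <- E.
    rewrite pairsum_pvec by auto. rewrite pow_add.
    assert (Cmod q <> 0) by (apply Rgt_not_eq, Cmod_pos; auto).
    unfold qabs2. rewrite pow_inv. rewrite <- (pow_mult (Cmod q) 2 (inversions a)).
    replace (2 * inversions a)%nat with (inversions a * 2)%nat by lia. rewrite pow_mult.
    assert (Cmod q ^ inversions a <> 0) by (apply pow_nonzero; auto).
    field. split; auto. apply Rgt_not_eq, qfact_pos. apply pow_lt, Cmod_pos; auto. Qed.

Definition validb (n : nat) (a : word) : bool := forallb (fun i => i <? n) a.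
Lemma validb_true n a : validb n a = true <-> valid_word n a.
Proof. unfold validb, valid_word. rewrite forallb_forall, Forall_forall.
  split; intros H x Hx; specialize (H x Hx); [apply Nat.ltb_lt|apply Nat.ltb_lt]; auto. Qed.

(* On the fibre of [k], [Olift g] is [g k * conj lambda / |lambda|^2] (weight identity):
   the lift of [g k] of least norm. *)
Definition Olift (q : CC) (n : nat) (g : Ocoef) : Fcoef := fun a =>
  if validb n a then Cmul (Cmul (Cconj (pi_coef q a)) (RC (Oweight q (pvec n a) ^ 2))) (g (pvec n a)) else C0.

Definition Pker (q : CC) (n : nat) (f : Fcoef) : Fcoef := Fsub f (Olift q n (pi_q q n f)).

Lemma Cmod_sub_lift_sq z l c w2 :
  Cmod (Csub z (Cmul (Cmul (Cconj l) (RC w2)) c)) ^ 2 =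
  Cmod z ^ 2 - 2 * w2 * (fst c * fst (Cmul l z) + snd c * snd (Cmul l z)) + w2 ^ 2 * (Cmod c ^ 2 * Cmod l ^ 2).
Proof. rewrite !Cmod_sq. destruct z, l, c; unfold Csub, Cadd, Copp, Cmul, Cconj, RC; simpl. ring. Qed.

Lemma rsum_combo {A} (l : list A) (a b c e : A -> R) w2 cr ci K :
  rsum l (fun x => a x - 2 * w2 * (cr * b x + ci * c x) + K * e x) =
  rsum l a - 2 * w2 * (cr * rsum l b + ci * rsum l c) + K * rsum l e.
Proof. induction l; unfold rsum in *; simpl; [ring|]. rewrite IHl; ring. Qed.

Lemma pi_q_components q n f k :
  fst (pi_q q n f k) = rsum (words n (sumN k)) (fun a => if list_eq_dec Nat.eq_dec (pvec n a) k then fst (Cmul (pi_coef q a) (f a)) else 0) /\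
  snd (pi_q q n f k) = rsum (words n (sumN k)) (fun a => if list_eq_dec Nat.eq_dec (pvec n a) k then snd (Cmul (pi_coef q a) (f a)) else 0).
Proof. unfold pi_q. rewrite csum_eq. simpl. split; apply rsum_ext; intros; destruct list_eq_dec; auto. Qed.

Lemma fiber_sqnorm_Pker q n f k : q <> C0 -> length k = n ->
  fiber_sqnorm n (Pker q n f) k = fiber_sqnorm n f k - Oweight q k ^ 2 * Cmod (pi_q q n f k) ^ 2.
Proof. intros Hq Hl. set (w2 := Oweight q k ^ 2). set (c := pi_q q n f k).
  unfold fiber_sqnorm at 1.
  rewrite (rsum_ext _ _ (fun a => (if list_eq_dec Nat.eq_dec (pvec n a) k then Cmod (f a) ^ 2 else 0)
     - 2 * w2 * (fst c * (if list_eq_dec Nat.eq_dec (pvec n a) k then fst (Cmul (pi_coef q a) (f a)) else 0)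
                 + snd c * (if list_eq_dec Nat.eq_dec (pvec n a) k then snd (Cmul (pi_coef q a) (f a)) else 0))
     + w2 ^ 2 * Cmod c ^ 2 * (if list_eq_dec Nat.eq_dec (pvec n a) k then Cmod (pi_coef q a) ^ 2 else 0))).
  - rewrite rsum_combo. destruct (pi_q_components q n f k) as [H1 H2]. fold c in H1, H2.
    rewrite <- H1, <- H2. fold (pi_coef_sqnorm q n k) (fiber_sqnorm n f k).
    pose proof (Oweight_sq_pi_coef_sqnorm q n k Hq Hl). fold w2 in H.
    replace (w2 ^ 2 * Cmod c ^ 2 * pi_coef_sqnorm q n k) with (w2 * Cmod c ^ 2 * (w2 * pi_coef_sqnorm q n k)) by ring.
    rewrite H. rewrite Cmod_sq. ring.
  - intros a Ha. apply in_words in Ha as [_ Hv]. destruct list_eq_dec as [E|E]; [|ring].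
    unfold Pker, Fsub, Olift. apply validb_true in Hv. rewrite Hv, E. fold w2 c.
    rewrite Cmod_sub_lift_sq. ring. Qed.

Lemma pi_q_fiber_bound q n f k : q <> C0 -> length k = n ->
  Cmod (pi_q q n f k) * Oweight q k <= sqrt (fiber_sqnorm n f k).
Proof. intros Hq Hl. pose proof (fiber_sqnorm_Pker q n f k Hq Hl). pose proof (fiber_sqnorm_nonneg n (Pker q n f) k).
  rewrite <- (sqrt_pow2 (Cmod (pi_q q n f k) * Oweight q k)).
  apply sqrt_le_1_alt. rewrite Rpow_mult_distr. lra.
  apply Rmult_le_pos. apply Cmod_ge0. left; apply Oweight_pos; auto. Qed.

Lemma pi_q_Olift_len q n g k : q <> C0 -> length k = n -> pi_q q n (Olift q n g) k = g k.
Proof. intros Hq Hl. unfold pi_q.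
  rewrite (csum_ext _ _ (fun a => Cmul (Cmul (RC (Oweight q k ^ 2)) (g k))
                   (RC (if list_eq_dec Nat.eq_dec (pvec n a) k then Cmod (pi_coef q a) ^ 2 else 0)))).
  - rewrite csum_scal.
    replace (csum (words n (sumN k)) (fun a => RC (if list_eq_dec Nat.eq_dec (pvec n a) k then Cmod (pi_coef q a) ^ 2 else 0)))
      with (RC (pi_coef_sqnorm q n k)).
    + pose proof (Oweight_sq_pi_coef_sqnorm q n k Hq Hl). destruct (g k). unfold RC, Cmul; simpl. apply CC_eq; simpl.
      transitivity (r * (Oweight q k ^ 2 * pi_coef_sqnorm q n k)); [ring|rewrite H; ring].
      transitivity (r0 * (Oweight q k ^ 2 * pi_coef_sqnorm q n k)); [ring|rewrite H; ring].
    + rewrite csum_eq. unfold RC. f_equal. simpl. symmetry. apply rsum_zero. auto.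
  - intros a Ha. apply in_words in Ha as [_ Hv]. destruct list_eq_dec as [E|E].
    + unfold Olift. apply validb_true in Hv. rewrite Hv, E. rewrite Cmul_assoc, Cmul_assoc, Cmul_conj.
      unfold RC. destruct (g k). simpl. apply CC_eq; simpl; ring.
    + unfold RC. destruct (g k); unfold Cmul; simpl; apply CC_eq; simpl; ring. Qed.

Lemma fiber_sqnorm_Olift q n g k : q <> C0 -> length k = n -> fiber_sqnorm n (Olift q n g) k = (Cmod (g k) * Oweight q k) ^ 2.
Proof. intros Hq Hl. unfold fiber_sqnorm.
  rewrite (rsum_ext _ _ (fun a => (Cmod (g k) ^ 2 * Oweight q k ^ 4) *
       (if list_eq_dec Nat.eq_dec (pvec n a) k then Cmod (pi_coef q a) ^ 2 else 0))).
  - rewrite rsum_scal. fold (pi_coef_sqnorm q n k). pose proof (Oweight_sq_pi_coef_sqnorm q n k Hq Hl).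
    replace (Cmod (g k) ^ 2 * Oweight q k ^ 4 * pi_coef_sqnorm q n k)
      with (Cmod (g k) ^ 2 * Oweight q k ^ 2 * (Oweight q k ^ 2 * pi_coef_sqnorm q n k)) by ring.
    rewrite H; ring.
  - intros a Ha. apply in_words in Ha as [_ Hv]. destruct list_eq_dec as [E|E]; [|ring].
    unfold Olift. apply validb_true in Hv. rewrite Hv, E. rewrite !Cmod_mul.
    rewrite Cmod_Cconj, Cmod_RC by apply pow2_ge_0. ring. Qed.

Lemma Fterm_circ_nonneg n f rho d : 0 <= rho -> 0 <= Fterm_circ n f rho d.
Proof. intros H. rewrite Fterm_circ_eq. apply Rmult_le_pos. apply rsum_nonneg; intros; apply sqrt_pos. apply pow_le; auto. Qed.

Lemma Oterm_nonneg n q g rho d : q <> C0 -> 0 <= rho -> 0 <= Oterm n q g rho d.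
Proof. intros Hq H. unfold Oterm. apply Rmult_le_pos. fold (rsum (mindices n d) (fun k => Cmod (g k) * Oweight q k)).
  apply rsum_nonneg; intros. apply Rmult_le_pos. apply Cmod_ge0. left; apply Oweight_pos; auto. apply pow_le; auto. Qed.

Lemma Oterm_pi_q_le_Fterm_circ q n f rho d : q <> C0 -> 0 <= rho ->
  Oterm n q (pi_q q n f) rho d <= Fterm_circ n f rho d.
Proof. intros Hq H. rewrite Fterm_circ_eq. unfold Oterm. apply Rmult_le_compat_r. apply pow_le; auto.
  fold (rsum (mindices n d) (fun k => Cmod (pi_q q n f k) * Oweight q k)). apply rsum_le.
  intros k Hk. apply in_mindices in Hk as [Hl _]. apply pi_q_fiber_bound; auto. Qed.

Lemma Fterm_circ_le_Fterm n r rho : rho_in r rho -> exists rho' K, rho_in r rho' /\ 0 <= K /\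
  forall f d, Fterm_circ n f rho d <= K * Fterm n f rho' d.
Proof. intros Hr. destruct (rho_in_larger r rho Hr) as [rho' [Hr' Hlt]].
  assert (Hx : 0 < rho / rho' < 1).
  { destruct Hr. split. apply Rdiv_lt_0_compat; lra. apply Rmult_lt_reg_r with rho'. lra.
    unfold Rdiv; rewrite Rmult_assoc, Rinv_l by lra. lra. }
  destruct (mindices_sqrt_bound n (rho / rho') Hx) as [K [HK HKb]].
  exists rho', K. split; auto. split; auto. intros f d.
  rewrite Fterm_circ_eq, Fterm_eq. eapply Rle_trans.
  apply Rmult_le_compat_r. apply pow_le; destruct Hr; lra. apply rsum_sqrt_fiber_le.
  replace (rho ^ d) with ((rho / rho') ^ d * rho' ^ d).
  2:{ rewrite <- Rpow_mult_distr. f_equal. field. destruct Hr'; lra. }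
  specialize (HKb d). pose proof (deg_norm_nonneg n f d). assert (0 <= rho' ^ d) by (apply pow_le; destruct Hr'; lra).
  pose proof (sqrt_pos (INR (length (mindices n d)))).
  replace (sqrt (INR (length (mindices n d))) * deg_norm n f d * ((rho / rho') ^ d * rho' ^ d))
    with ((sqrt (INR (length (mindices n d))) * (rho / rho') ^ d) * (deg_norm n f d * rho' ^ d)) by ring.
  apply Rmult_le_compat_r; auto. apply Rmult_le_pos; auto. Qed.

Lemma Fterm_circ_conv n r f rho : inF n r f -> rho_in r rho -> series_conv (Fterm_circ n f rho).
Proof. intros [_ Hf] Hr. destruct (Fterm_circ_le_Fterm n r rho Hr) as [rho' [K [Hr' [HK Hb]]]].
  destruct (series_scal _ K (Hf rho' Hr')) as [Hc _].
  refine (proj1 (series_comp _ _ _ Hc)). intros d. split. apply Fterm_circ_nonneg; destruct Hr; lra. apply Hb. Qed.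

Lemma pi_q_inO q n r f : q <> C0 -> inF n r f -> inO n r q (pi_q q n f).
Proof. intros Hq Hf. split. intros k Hk; apply pi_q_badlen; auto.
  intros rho Hr. refine (proj1 (series_comp _ _ _ (Fterm_circ_conv n r f rho Hf Hr))).
  intros d. assert (0 <= rho) by (destruct Hr; lra). split. apply Oterm_nonneg; auto. apply Oterm_pi_q_le_Fterm_circ; auto. Qed.

Lemma pi_q_continuous q n r rho : q <> C0 -> rho_in r rho -> exists rho' K, rho_in r rho' /\ 0 <= K /\
  forall f, inF n r f -> Onorm_B n q (pi_q q n f) rho <= K * Fnorm_bullet n f rho'.
Proof. intros Hq Hr. destruct (Fterm_circ_le_Fterm n r rho Hr) as [rho' [K [Hr' [HK Hb]]]].
  exists rho', K. split; auto. split; auto. intros f [Hf1 Hf2].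
  assert (0 <= rho) by (destruct Hr; lra).
  destruct (series_scal _ K (Hf2 rho' Hr')) as [Hc Hv].
  unfold Fnorm_bullet. rewrite <- Hv.
  destruct (series_comp (Fterm_circ n f rho) _ (fun d => conj (Fterm_circ_nonneg n f rho d H) (Hb f d)) Hc) as [Hc2 Hv2].
  destruct (series_comp (Oterm n q (pi_q q n f) rho) _
    (fun d => conj (Oterm_nonneg n q _ rho d Hq H) (Oterm_pi_q_le_Fterm_circ q n f rho d Hq H)) Hc2)
    as [_ Hv3].
  unfold Onorm_B. lra. Qed.

Lemma Fterm_Olift_le q n g rho d : q <> C0 -> 0 <= rho -> Fterm n (Olift q n g) rho d <= Oterm n q g rho d.
Proof. intros Hq H. rewrite Fterm_eq. unfold Oterm. apply Rmult_le_compat_r. apply pow_le; auto.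
  fold (rsum (mindices n d) (fun k => Cmod (g k) * Oweight q k)). unfold deg_norm. rewrite deg_norm_partition.
  rewrite (rsum_ext _ _ (fun k => (Cmod (g k) * Oweight q k) ^ 2)).
  2:{ intros k Hk. apply in_mindices in Hk as [Hl _]. apply fiber_sqnorm_Olift; auto. }
  assert (Hn : forall k, 0 <= Cmod (g k) * Oweight q k).
  { intros; apply Rmult_le_pos. apply Cmod_ge0. left; apply Oweight_pos; auto. }
  rewrite <- (sqrt_pow2 (rsum (mindices n d) (fun k => Cmod (g k) * Oweight q k))) by (apply rsum_nonneg; auto).
  apply sqrt_le_1_alt. apply sumsq_le_sq. auto. Qed.

Lemma Olift_inF q n r g : q <> C0 -> inO n r q g -> inF n r (Olift q n g).
Proof. intros Hq [_ Hg]. split.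
  - intros a Ha. unfold Olift. destruct (validb n a) eqn:E; auto. apply validb_true in E; contradiction.
  - intros rho Hr. assert (0 <= rho) by (destruct Hr; lra).
    refine (proj1 (series_comp _ _ _ (Hg rho Hr))). intros d. split. apply Fterm_nonneg; auto. apply Fterm_Olift_le; auto. Qed.

Lemma pi_q_Olift q n r g k : q <> C0 -> inO n r q g -> pi_q q n (Olift q n g) k = g k.
Proof. intros Hq [Hg _]. destruct (Nat.eq_dec (length k) n). apply pi_q_Olift_len; auto.
  rewrite pi_q_badlen, Hg; auto. Qed.

Lemma Fterm_circ_Olift q n g rho d : q <> C0 -> Fterm_circ n (Olift q n g) rho d = Oterm n q g rho d.
Proof. intros Hq. rewrite Fterm_circ_eq. unfold Oterm. f_equal.
  fold (rsum (mindices n d) (fun k => Cmod (g k) * Oweight q k)). apply rsum_ext.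
  intros k Hk. apply in_mindices in Hk as [Hl _]. rewrite fiber_sqnorm_Olift by auto. apply sqrt_pow2.
  apply Rmult_le_pos. apply Cmod_ge0. left; apply Oweight_pos; auto. Qed.

Lemma Onorm_B_quotient_norm q n r rho g : q <> C0 -> rho_in r rho -> inO n r q g ->
  is_glb (fun t => exists f, inF n r f /\ (forall k, pi_q q n f k = g k) /\ t = Fnorm_circ n f rho)
         (Onorm_B n q g rho).
Proof. intros Hq Hr Hg. assert (0 <= rho) by (destruct Hr; lra). split.
  - intros t [f [Hf [Hpf ->]]]. unfold Onorm_B, Fnorm_circ.
    refine (proj2 (series_comp _ _ _ (Fterm_circ_conv n r f rho Hf Hr))). intros d. split.
    apply Oterm_nonneg; auto.
    replace (Oterm n q g rho d) with (Oterm n q (pi_q q n f) rho d).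
    apply Oterm_pi_q_le_Fterm_circ; auto.
    unfold Oterm. f_equal. f_equal. apply map_ext. intros k. rewrite Hpf. auto.
  - intros eps He. exists (Onorm_B n q g rho). split; [|lra].
    exists (Olift q n g). split. apply Olift_inF; auto. split. intros; apply pi_q_Olift with r; auto.
    unfold Fnorm_circ, Onorm_B. apply series_ext. intros d. symmetry; apply Fterm_circ_Olift; auto. Qed.

Lemma pi_q_Pker q n r f k : q <> C0 -> inF n r f -> pi_q q n (Pker q n f) k = C0.
Proof. intros Hq Hf. unfold Pker. rewrite pi_q_sub. rewrite (pi_q_Olift q n r) by (auto; apply pi_q_inO; auto). Csolve. Qed.

Lemma Pker_inF q n r f : q <> C0 -> inF n r f -> inF n r (Pker q n f).
Proof. intros Hq Hf. unfold Pker. apply inF_sub; auto. apply Olift_inF; auto. apply pi_q_inO; auto. Qed.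

Lemma Fterm_Pker_le q n f rho d : q <> C0 -> 0 <= rho -> Fterm n (Pker q n f) rho d <= Fterm n f rho d.
Proof. intros Hq H. rewrite !Fterm_eq. apply Rmult_le_compat_r. apply pow_le; auto.
  unfold deg_norm. apply sqrt_le_1_alt. rewrite !deg_norm_partition. apply rsum_le.
  intros k Hk. apply in_mindices in Hk as [Hl _]. rewrite fiber_sqnorm_Pker by auto.
  pose proof (pow2_ge_0 (Oweight q k)). pose proof (pow2_ge_0 (Cmod (pi_q q n f k))). nra. Qed.

Lemma Pker_norm_le q n r rho f : q <> C0 -> rho_in r rho -> inF n r f ->
  Fnorm_bullet n (Pker q n f) rho <= Fnorm_bullet n f rho.
Proof. intros Hq Hr [Hf1 Hf2]. assert (0 <= rho) by (destruct Hr; lra).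
  refine (proj2 (series_comp _ _ _ (Hf2 rho Hr))). intros d. split. apply Fterm_nonneg; auto. apply Fterm_Pker_le; auto. Qed.

Lemma Pker_id q n f : (forall k, pi_q q n f k = C0) -> forall a, Pker q n f a = f a.
Proof. intros H a. unfold Pker, Fsub, Olift. destruct validb. rewrite H. Csolve. Csolve. Qed.

Lemma Pker_add q n f g a : Pker q n (Fadd f g) a = Fadd (Pker q n f) (Pker q n g) a.
Proof. assert (E : pi_q q n (Fadd f g) = fun k => Oadd (pi_q q n f) (pi_q q n g) k)
    by (apply functional_extensionality; intros; apply pi_q_add).
  unfold Pker. rewrite E. unfold Fsub, Fadd, Olift, Oadd. destruct validb; Csolve. Qed.

Lemma Pker_scale q n c f a : Pker q n (Fscale c f) a = Fscale c (Pker q n f) a.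
Proof. assert (E : pi_q q n (Fscale c f) = fun k => Oscale c (pi_q q n f) k)
    by (apply functional_extensionality; intros; apply pi_q_scale).
  unfold Pker. rewrite E. unfold Fsub, Fscale, Olift, Oscale. destruct validb; Csolve. Qed.

(** * The kernel of [pi_q] *)

Section Sorting.
Local Open Scope nat_scope.

Fixpoint insert (x : nat) (l : list nat) : list nat :=
  match l with [] => [x] | y :: l' => if x <=? y then x :: l else y :: insert x l' end.
Fixpoint isort (l : list nat) : list nat :=
  match l with [] => [] | x :: l' => insert x (isort l') end.

Lemma insert_perm x l : Permutation (x :: l) (insert x l).
Proof. induction l; simpl; auto. destruct (x <=? a); auto.
  eapply perm_trans. apply perm_swap. constructor; auto. Qed.
Lemma isort_perm l : Permutation l (isort l).
Proof. induction l; simpl; auto. eapply perm_trans. constructor; apply IHl. apply insert_perm. Qed.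

Lemma inversions_cons_eq0 x l : inversions (x :: l) = 0 <-> inversions l = 0 /\ forall z, In z l -> x <= z.
Proof. simpl. split.
  - intros H. split. lia. intros z Hz. destruct (z <? x) eqn:E.
    + assert (In z (filter (fun z => z <? x) l)) by (apply filter_In; auto).
      destruct (filter (fun z => z <? x) l); simpl in *; [contradiction|lia].
    + apply Nat.ltb_ge in E; auto.
  - intros [H1 H2]. rewrite H1. simpl.
    destruct (filter (fun z => z <? x) l) eqn:E; auto. exfalso.
    assert (In n (filter (fun z => z <? x) l)) by (rewrite E; left; auto).
    apply filter_In in H as [Hn Hlt]. apply Nat.ltb_lt in Hlt. specialize (H2 n Hn). lia. Qed.

Lemma insert_sorted x l : inversions l = 0 -> inversions (insert x l) = 0.
Proof. induction l; intros H; simpl; auto. apply inversions_cons_eq0 in H as [H1 H2].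
  destruct (x <=? a) eqn:E.
  - apply Nat.leb_le in E. apply inversions_cons_eq0. split. apply inversions_cons_eq0; auto.
    intros z [<-|Hz]; auto. specialize (H2 z Hz); lia.
  - apply Nat.leb_gt in E. apply inversions_cons_eq0. split; auto.
    intros z Hz. apply (Permutation_in _ (Permutation_sym (insert_perm x l))) in Hz.
    destruct Hz as [<-|Hz]; auto. lia. Qed.

Lemma isort_sorted l : inversions (isort l) = 0.
Proof. induction l; simpl; auto. apply insert_sorted; auto. Qed.

Lemma sorted_eq_of_count a b : inversions a = 0 -> inversions b = 0 ->
  (forall j, count_occ Nat.eq_dec a j = count_occ Nat.eq_dec b j) -> a = b.
Proof. revert b; induction a as [|x a IH]; intros b Ha Hb Hc.
  - destruct b as [|y b]; auto. specialize (Hc y). rewrite count_occ_cons_eq in Hc by auto. simpl in Hc. lia.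
  - destruct b as [|y b].
    + specialize (Hc x). rewrite count_occ_cons_eq in Hc by auto. simpl in Hc. lia.
    + apply inversions_cons_eq0 in Ha as [Ha1 Ha2]. apply inversions_cons_eq0 in Hb as [Hb1 Hb2].
      assert (Hxb : In x (y :: b)). { apply (count_occ_In Nat.eq_dec). rewrite <- Hc. rewrite count_occ_cons_eq; lia. }
      assert (Hya : In y (x :: a)). { apply (count_occ_In Nat.eq_dec). rewrite Hc. rewrite count_occ_cons_eq; lia. }
      assert (x = y).
      { destruct Hxb as [->|Hxb]; auto. destruct Hya as [->|Hya]; auto.
        specialize (Ha2 y Hya); specialize (Hb2 x Hxb); lia. }
      subst y. f_equal. apply IH; auto. intros j. specialize (Hc j).
      destruct (Nat.eq_dec x j). rewrite !count_occ_cons_eq in Hc by auto. lia.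
      rewrite !count_occ_cons_neq in Hc by auto. auto. Qed.

Lemma inversions_descent a : inversions a <> 0 -> exists u x y v, a = u ++ x :: y :: v /\ y < x.
Proof. induction a as [|x a IH]; intros H; simpl in H; [lia|].
  destruct (Nat.eq_dec (inversions a) 0) as [H0|H0].
  - destruct a as [|y a]; [simpl in H; lia|].
    destruct (y <? x) eqn:E.
    + exists [], x, y, a. split; auto. apply Nat.ltb_lt; auto.
    + exfalso. pose proof E as E'. apply Nat.ltb_ge in E. assert (Hs := proj2 (proj1 (inversions_cons_eq0 y a) H0)).
      rewrite H0 in H. cbn [filter] in H. rewrite E' in H.
      destruct (filter (fun z => z <? x) a) eqn:F; simpl in H; [lia|].
      assert (In n (filter (fun z => z <? x) a)) by (rewrite F; left; auto).
      apply filter_In in H1 as [Hn Hlt]. apply Nat.ltb_lt in Hlt. specialize (Hs n Hn). lia.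
  - destruct (IH H0) as [u [x' [y [v [-> Hl]]]]]. exists (x :: u), x', y, v. split; auto. Qed.

Lemma filter_swap_len (p : nat -> bool) (u : list nat) x y v :
  length (filter p (u ++ x :: y :: v)) = length (filter p (u ++ y :: x :: v)).
Proof. rewrite !filter_app, !length_app. f_equal. simpl. destruct (p x), (p y); simpl; lia. Qed.

Lemma inversions_swap u x y v : y < x -> inversions (u ++ x :: y :: v) = S (inversions (u ++ y :: x :: v)).
Proof. intros H. induction u as [|z u IH].
  - simpl. assert ((y <? x) = true) by (apply Nat.ltb_lt; auto). assert ((x <? y) = false) by (apply Nat.ltb_ge; lia).
    rewrite H0, H1. simpl. lia.
  - simpl. rewrite IH. rewrite (filter_swap_len (fun w => w <? z)). lia. Qed.

Lemma count_swap u x y v j :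
  count_occ Nat.eq_dec (u ++ x :: y :: v) j = count_occ Nat.eq_dec (u ++ y :: x :: v) j.
Proof. rewrite !count_occ_app. f_equal. simpl. destruct (Nat.eq_dec x j), (Nat.eq_dec y j); lia. Qed.

Lemma isort_count l j : count_occ Nat.eq_dec (isort l) j = count_occ Nat.eq_dec l j.
Proof. symmetry. apply Permutation_count_occ. apply isort_perm. Qed.

Lemma isort_eq_of_count a b : (forall j, count_occ Nat.eq_dec a j = count_occ Nat.eq_dec b j) -> isort a = isort b.
Proof. intros H. apply sorted_eq_of_count; try apply isort_sorted. intros j. rewrite !isort_count; auto. Qed.

Lemma isort_valid n a : valid_word n a -> valid_word n (isort a).
Proof. unfold valid_word. rewrite !Forall_forall. intros H x Hx. apply H.
  apply (Permutation_in _ (Permutation_sym (isort_perm a))); auto. Qed.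

Lemma isort_length a : length (isort a) = length a.
Proof. symmetry; apply Permutation_length, isort_perm. Qed.

Lemma isort_sorted_id a : inversions a = 0 -> isort a = a.
Proof. intros H. apply sorted_eq_of_count; auto. apply isort_sorted. apply isort_count. Qed.

Lemma count_occ_invalid n a j : valid_word n a -> n <= j -> count_occ Nat.eq_dec a j = 0.
Proof. intros Hv Hj. apply count_occ_not_In. intros Hin. unfold valid_word in Hv. rewrite Forall_forall in Hv.
  specialize (Hv j Hin). lia. Qed.

Lemma pvec_eq_count n a b : valid_word n a -> valid_word n b ->
  (pvec n a = pvec n b <-> forall j, count_occ Nat.eq_dec a j = count_occ Nat.eq_dec b j).
Proof. intros Ha Hb. split.
  - intros E j. destruct (lt_dec j n). rewrite <- (nth_pvec n a j), <- (nth_pvec n b j) by auto. rewrite E; auto.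
    rewrite !(count_occ_invalid n) by (auto; lia). auto.
  - intros H. unfold pvec. apply map_ext. auto. Qed.

Lemma isort_eq_iff n a w : valid_word n a -> valid_word n w -> inversions w = 0 ->
  (isort a = w <-> pvec n a = pvec n w).
Proof. intros Ha Hw Hs. rewrite pvec_eq_count by auto. split.
  - intros <- j. rewrite isort_count; auto.
  - intros H. rewrite <- (isort_sorted_id w Hs). apply isort_eq_of_count; auto. Qed.

End Sorting.

Lemma Fmul_sub_r f g h : Fmul f (Fsub g h) = Fsub (Fmul f g) (Fmul f h).
Proof. apply functional_extensionality; intros a. unfold Fmul, Fsub.
  fold (csum (seq 0 (S (length a))) (fun i => Cmul (f (firstn i a)) (Csub (g (skipn i a)) (h (skipn i a))))).
  fold (csum (seq 0 (S (length a))) (fun i => Cmul (f (firstn i a)) (g (skipn i a)))).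
  fold (csum (seq 0 (S (length a))) (fun i => Cmul (f (firstn i a)) (h (skipn i a)))).
  rewrite <- csum_sub. apply csum_ext; intros. Csolve. Qed.

Lemma Fmul_scale_r f c g : Fmul f (Fscale c g) = Fscale c (Fmul f g).
Proof. apply functional_extensionality; intros a. unfold Fmul, Fscale.
  fold (csum (seq 0 (S (length a))) (fun i => Cmul (f (firstn i a)) (Cmul c (g (skipn i a))))).
  fold (csum (seq 0 (S (length a))) (fun i => Cmul (f (firstn i a)) (g (skipn i a)))).
  rewrite <- csum_scal. apply csum_ext; intros. Csolve. Qed.

Lemma Fmul_sub_l f g h : Fmul (Fsub f g) h = Fsub (Fmul f h) (Fmul g h).
Proof. apply functional_extensionality; intros a. unfold Fmul, Fsub.
  fold (csum (seq 0 (S (length a))) (fun i => Cmul (Csub (f (firstn i a)) (g (firstn i a))) (h (skipn i a)))).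
  fold (csum (seq 0 (S (length a))) (fun i => Cmul (f (firstn i a)) (h (skipn i a)))).
  fold (csum (seq 0 (S (length a))) (fun i => Cmul (g (firstn i a)) (h (skipn i a)))).
  rewrite <- csum_sub. apply csum_ext; intros. Csolve. Qed.

Lemma Fmul_scale_l c f g : Fmul (Fscale c f) g = Fscale c (Fmul f g).
Proof. apply functional_extensionality; intros a. unfold Fmul, Fscale.
  fold (csum (seq 0 (S (length a))) (fun i => Cmul (Cmul c (f (firstn i a))) (g (skipn i a)))).
  fold (csum (seq 0 (S (length a))) (fun i => Cmul (f (firstn i a)) (g (skipn i a)))).
  rewrite <- csum_scal. apply csum_ext; intros. Csolve. Qed.

Lemma Fword_mul a b : Fmul (Fword a) (Fword b) = Fword (a ++ b).
Proof. apply functional_extensionality; intros w. unfold Fmul.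
  fold (csum (seq 0 (S (length w))) (fun i => Cmul (Fword a (firstn i w)) (Fword b (skipn i w)))).
  unfold Fword at 3. destruct list_eq_dec as [E|E].
  - subst w. rewrite (csum_single _ _ (length a)).
    + destruct (firstn_skipn_app_len a b) as [H1 H2]. rewrite H1, H2. unfold Fword.
      destruct list_eq_dec; [|congruence]. destruct list_eq_dec; [|congruence]. Csolve.
    + apply seq_NoDup.
    + apply in_seq. rewrite length_app. lia.
    + intros i Hi Hne. apply in_seq in Hi. unfold Fword. destruct list_eq_dec as [E1|E1].
      * exfalso. apply Hne. apply (f_equal (@length nat)) in E1. rewrite length_firstn in E1.
        rewrite length_app in *. lia.
      * apply Cmul_0_l.
  - apply csum_zero. intros i _. unfold Fword. destruct list_eq_dec as [E1|E1]; [|apply Cmul_0_l].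
    destruct list_eq_dec as [E2|E2]; [|apply Cmul_0_r]. exfalso; apply E.
    rewrite <- E1, <- E2. symmetry; apply firstn_skipn. Qed.

Lemma zeta_Fword i : zeta i = Fword [i].
Proof. reflexivity. Qed.

Lemma qrel_eq q i j : qrel q i j = Fsub (Fword [i; j]) (Fscale q (Fword [j; i])).
Proof. unfold qrel. rewrite !zeta_Fword, !Fword_mul. reflexivity. Qed.

Lemma Fword_qrel_Fword q u x y v : Fmul (Fmul (Fword u) (qrel q y x)) (Fword v) =
  Fsub (Fword (u ++ y :: x :: v)) (Fscale q (Fword (u ++ x :: y :: v))).
Proof. rewrite qrel_eq, Fmul_sub_r, Fmul_scale_r, !Fword_mul, Fmul_sub_l, Fmul_scale_l, !Fword_mul.
  rewrite <- !app_assoc. reflexivity. Qed.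

Lemma pi_q_Fword q n w k : valid_word n w -> pi_q q n (Fword w) k = if list_eq_dec Nat.eq_dec (pvec n w) k then pi_coef q w else C0.
Proof. intros Hv. unfold pi_q. destruct list_eq_dec as [E|E].
  - rewrite (csum_single _ _ w).
    + destruct list_eq_dec; [|congruence]. unfold Fword. destruct list_eq_dec; [|congruence]. Csolve.
    + apply NoDup_words.
    + apply in_words. split; auto. rewrite <- E. symmetry; apply sumN_pvec; auto.
    + intros y _ Hy. destruct list_eq_dec; auto. unfold Fword. destruct list_eq_dec; [congruence|]. apply Cmul_0_r.
  - apply csum_zero. intros a _. destruct list_eq_dec as [E1|E1]; auto. unfold Fword.
    destruct list_eq_dec; [subst; congruence|]. apply Cmul_0_r. Qed.

Definition sort_defect (q : CC) (a : word) : Fcoef := Fsub (Fword a) (Fscale (pi_coef q a) (Fword (isort a))).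

Lemma valid_word_swap n u x y v : valid_word n (u ++ x :: y :: v) ->
  valid_word n u /\ valid_word n v /\ (x < n)%nat /\ valid_word n (u ++ y :: x :: v).
Proof.
  unfold valid_word. intros Hv. apply Forall_app in Hv as [Hu Hxyv].
  inversion Hxyv as [|? ? Hx Hyv]; inversion Hyv as [|? ? Hy Hv]; subst.
  repeat split; auto. apply Forall_app; split; auto.
Qed.

(* Swapping an adjacent descent costs one relation [qrel q y x], placed between the
   words [u] and [v]. *)
Lemma sort_defect_swap q u x y v : q <> C0 -> (y < x)%nat ->
  sort_defect q (u ++ x :: y :: v) =
  Fadd (Fscale (Cinv q) (sort_defect q (u ++ y :: x :: v)))
       (Fscale (Copp (Cinv q)) (Fmul (Fmul (Fword u) (qrel q y x)) (Fword v))).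
Proof.
  intros Hq Hyx. set (a := u ++ x :: y :: v). set (a' := u ++ y :: x :: v).
  assert (Hsort : isort a = isort a') by (apply isort_eq_of_count; intros; apply count_swap).
  assert (Hcoef : pi_coef q a = Cmul (Cinv q) (pi_coef q a'))
    by (unfold pi_coef, a, a'; rewrite inversions_swap by auto; reflexivity).
  apply functional_extensionality; intros w. rewrite Fword_qrel_Fword. fold a a'.
  unfold sort_defect, Fadd, Fscale, Fsub. rewrite Hsort, Hcoef.
  generalize (Fword a w), (Fword a' w), (Fword (isort a') w), (pi_coef q a'). intros z1 z2 z3 l. symmetry.
  transitivity (Csub (Cmul (Cmul (Cinv q) q) z1) (Cmul (Cmul (Cinv q) l) z3)); [Csolve|].
  rewrite Cinv_mul by auto. f_equal. apply Cmul_1_l.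
Qed.

Lemma sort_defect_in_ideal q n r S : q <> C0 -> closed_ideal n r S ->
  (forall i j, (i < j < n)%nat -> S (qrel q i j)) -> forall a, valid_word n a -> S (sort_defect q a).
Proof.
  intros Hq [_ [HS0 [HSadd [HSscale [HSmul _]]]]] Hrel.
  assert (forall m a, inversions a = m -> valid_word n a -> S (sort_defect q a)); [|intros; eauto].
  induction m; intros a Hm Hv.
  - replace (sort_defect q a) with F0; auto. apply functional_extensionality; intros w.
    unfold sort_defect, Fsub, Fscale, F0. rewrite isort_sorted_id by auto. unfold pi_coef. rewrite Hm. simpl. Csolve.
  - destruct (inversions_descent a) as [u [x [y [v [-> Hyx]]]]]; [lia|].
    destruct (valid_word_swap n u x y v Hv) as [Hu [Hvv [Hx Hv']]].
    rewrite sort_defect_swap by auto. apply HSadd; apply HSscale.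
    + apply IHm; auto. rewrite inversions_swap in Hm by auto. lia.
    + destruct (HSmul (qrel q y x) (Fword u)) as [H1 _]; [apply Hrel; lia|apply inF_Fword; auto|].
      apply (HSmul _ (Fword v) H1). apply inF_Fword; auto.
Qed.

Definition Fsum {A} (L : list A) (G : A -> Fcoef) : Fcoef := fun w => csum L (fun a => G a w).

Lemma ideal_Fsum {A} n r S (L : list A) G : closed_ideal n r S -> (forall a, In a L -> S (G a)) -> S (Fsum L G).
Proof. intros HS HG. destruct HS as [_ [HS0 [HSadd _]]]. induction L.
  - exact HS0.
  - change (S (Fadd (G a) (Fsum L G))). apply HSadd. apply HG; left; auto. apply IHL; intros; apply HG; right; auto. Qed.

Definition Ftrunc (N : nat) (f : Fcoef) : Fcoef := fun w => if le_dec (length w) N then f w else C0.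

(* A kernel element has zero sum over each fibre, and the fibre of [p w] is the set of
   words sorting to [w]. *)
Lemma csum_sorting_to_zero q n f d w : (forall k, pi_q q n f k = C0) ->
  csum (words n d) (fun a => if list_eq_dec Nat.eq_dec (isort a) w then Cmul (pi_coef q a) (f a) else C0) = C0.
Proof.
  intros Hker. destruct (classic (valid_word n w /\ inversions w = 0%nat /\ length w = d)) as [[Hw [Hs Hl]]|Hno].
  - transitivity (pi_q q n f (pvec n w)); [|apply Hker]. unfold pi_q. rewrite sumN_pvec, Hl by auto.
    apply csum_ext. intros a Ha. apply in_words in Ha as [_ Hva].
    assert (Hiff := isort_eq_iff n a w Hva Hw Hs).
    destruct (list_eq_dec Nat.eq_dec (isort a) w); destruct (list_eq_dec Nat.eq_dec (pvec n a) (pvec n w)); tauto.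
  - apply csum_zero. intros a Ha. apply in_words in Ha as [Hl Hva]. destruct list_eq_dec as [E|E]; auto.
    exfalso; apply Hno. subst w. split; [apply isort_valid; auto|]. split; [apply isort_sorted|].
    rewrite isort_length; auto.
Qed.

Lemma Ftrunc_as_csum n f N w : (forall a, ~ valid_word n a -> f a = C0) ->
  Ftrunc N f w = csum (seq 0 (S N)) (fun d => csum (words n d) (fun a => Cmul (f a) (Fword a w))).
Proof.
  intros Hsupp. assert (Hword : forall d a, In a (words n d) -> a <> w -> Cmul (f a) (Fword a w) = C0).
  { intros d a _ Ha. unfold Fword. destruct list_eq_dec; [congruence|]. apply Cmul_0_r. }
  unfold Ftrunc. destruct (classic (valid_word n w)) as [Hw|Hw].
  - destruct le_dec as [Hle|Hle].
    + rewrite (csum_single _ _ (length w)).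
      * rewrite (csum_single _ _ w); [|apply NoDup_words|apply in_words; auto|eauto].
        unfold Fword. destruct list_eq_dec; [|congruence]. Csolve.
      * apply seq_NoDup.
      * apply in_seq; lia.
      * intros d _ Hd. apply csum_zero. intros a Ha. apply (Hword d); auto.
        apply in_words in Ha as [Hl _]. congruence.
    + symmetry. apply csum_zero. intros d Hd. apply in_seq in Hd. apply csum_zero. intros a Ha.
      apply (Hword d); auto. apply in_words in Ha as [Hl _]. intros ->; lia.
  - rewrite csum_zero; [destruct le_dec; rewrite ?Hsupp by auto; reflexivity|].
    intros d _. apply csum_zero. intros a Ha. apply (Hword d); auto.
    apply in_words in Ha as [_ Hva]. intros ->; contradiction.
Qed.

Lemma Ftrunc_ker_decomp q n f N : (forall a, ~ valid_word n a -> f a = C0) -> (forall k, pi_q q n f k = C0) ->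
  Ftrunc N f = Fsum (flat_map (words n) (seq 0 (S N))) (fun a => Fscale (f a) (sort_defect q a)).
Proof.
  intros Hsupp Hker. apply functional_extensionality; intros w. unfold Fsum, sort_defect, Fscale, Fsub.
  rewrite (csum_ext _ _ (fun a => Csub (Cmul (f a) (Fword a w))
     (if list_eq_dec Nat.eq_dec (isort a) w then Cmul (pi_coef q a) (f a) else C0))).
  2:{ intros a _. unfold Fword at 2.
      destruct (list_eq_dec Nat.eq_dec w (isort a)), (list_eq_dec Nat.eq_dec (isort a) w); try congruence;
      generalize (Fword a w) (f a) (pi_coef q a); intros; Csolve. }
  rewrite csum_sub, !csum_flat_map, (csum_zero (seq 0 (S N)) _ (fun d _ => csum_sorting_to_zero q n f d w Hker)).
  rewrite <- Ftrunc_as_csum by auto. Csolve.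
Qed.

Lemma Ftrunc_conv n r f : inF n r f -> Fconverges n r (fun N => Ftrunc N f) f.
Proof. intros [_ Hf] rho Hr. assert (0 <= rho) by (destruct Hr; lra).
  assert (E : forall N d, Fterm n (Fsub (Ftrunc N f) f) rho d = if le_lt_dec d N then 0 else Fterm n f rho d).
  { intros N d. rewrite !Fterm_eq. unfold deg_norm. destruct le_lt_dec.
    - rewrite rsum_zero. rewrite sqrt_0; ring. intros w Hw. apply in_words in Hw as [Hl _].
      unfold Fsub, Ftrunc. destruct le_dec; [|lia]. replace (Csub (f w) (f w)) with C0 by Csolve. rewrite Cmod_C0; ring.
    - f_equal. f_equal. apply rsum_ext. intros w Hw. apply in_words in Hw as [Hl _].
      unfold Fsub, Ftrunc. destruct le_dec; [lia|]. replace (Csub C0 (f w)) with (Copp (f w)) by Csolve.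
      rewrite Cmod_opp; auto. }
  assert (E2 : (fun N => Fnorm_bullet n (Fsub (Ftrunc N f) f) rho) = (fun N => series_val (Fterm n f rho) - sum_f_R0 (Fterm n f rho) N)).
  { apply functional_extensionality; intros N. unfold Fnorm_bullet.
    rewrite (series_ext _ (fun d => if le_lt_dec d N then 0 else Fterm n f rho d)) by apply E.
    apply series_tail; auto. }
  rewrite E2. apply tail_to_zero; auto. Qed.

Lemma ker_in_ideal q n r f : q <> C0 -> inF n r f -> (forall k, pi_q q n f k = C0) -> in_gen_ideal n r q f.
Proof. intros Hq Hf Hker S HS Hrel. pose proof HS as HS'. destruct HS' as [_ [_ [_ [HSscale [_ HSlim]]]]].
  apply HSlim with (u := fun N => Ftrunc N f); auto.
  - intros N. rewrite (Ftrunc_ker_decomp q n f N (proj1 Hf) Hker). apply (ideal_Fsum n r); auto.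
    intros a Ha. apply in_flat_map in Ha as [d [_ Ha]]. apply in_words in Ha as [_ Hv].
    apply HSscale. apply (sort_defect_in_ideal q n r S); auto.
  - apply Ftrunc_conv; auto. Qed.

Lemma fiber_sqnorm_le n h k : fiber_sqnorm n h k <= rsum (words n (sumN k)) (fun a => Cmod (h a) ^ 2).
Proof. apply rsum_le. intros; destruct list_eq_dec; [lra|apply pow2_ge_0]. Qed.

Lemma Omul_zero_r q G H m : (forall k, H k = C0) -> Omul q G H m = C0.
Proof. intros HH. unfold Omul. change (Csum (map ?F (below m))) with (csum (below m) F).
  apply csum_zero. intros k _. rewrite HH. rewrite Cmul_0_r. apply Cmul_0_r. Qed.
Lemma Omul_zero_l q G H m : (forall k, G k = C0) -> Omul q G H m = C0.
Proof. intros HG. unfold Omul. change (Csum (map ?F (below m))) with (csum (below m) F).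
  apply csum_zero. intros k _. rewrite HG. rewrite Cmul_0_l. apply Cmul_0_r. Qed.

Lemma rho_in_exists r : radius_ok r -> exists rho, rho_in r rho.
Proof. destruct r as [r0|]; simpl; intros H. exists (r0 / 2). split; lra. exists 1. split; [lra|auto]. Qed.

Lemma pi_q_coef_le_Fnorm q n r f k rho : q <> C0 -> inF n r f -> rho_in r rho -> length k = n ->
  Cmod (pi_q q n f k) * Oweight q k * rho ^ sumN k <= Fnorm_bullet n f rho.
Proof.
  intros Hq Hf Hrho Hl. apply Rle_trans with (Fterm n f rho (sumN k)).
  - rewrite Fterm_eq. apply Rmult_le_compat_r; [apply pow_le; destruct Hrho; lra|].
    eapply Rle_trans; [apply pi_q_fiber_bound; auto|].
    unfold deg_norm. apply sqrt_le_1_alt, fiber_sqnorm_le.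
  - apply series_term_le; [intros; apply Fterm_nonneg; destruct Hrho; lra|]. apply (proj2 Hf); auto.
Qed.

Lemma ker_closed_under_limits q n r u f : q <> C0 -> radius_ok r ->
  (forall m, inF n r (u m) /\ forall k, pi_q q n (u m) k = C0) -> inF n r f ->
  Fconverges n r u f -> forall k, pi_q q n f k = C0.
Proof.
  intros Hq Hr Hu Hf Hconv k.
  destruct (Nat.eq_dec (length k) n) as [Hl|Hl]; [|apply pi_q_badlen; auto].
  destruct (rho_in_exists r Hr) as [rho Hrho].
  set (c := Oweight q k * rho ^ sumN k).
  assert (Hc : 0 < c) by (apply Rmult_lt_0_compat; [apply Oweight_pos|apply pow_lt; destruct Hrho]; auto).
  assert (Hb : forall m, Cmod (pi_q q n f k) * c <= Fnorm_bullet n (Fsub (u m) f) rho).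
  { intros m. destruct (Hu m) as [Hum Hum0].
    replace (Cmod (pi_q q n f k)) with (Cmod (pi_q q n (Fsub (u m) f) k)).
    - unfold c. rewrite <- Rmult_assoc. apply pi_q_coef_le_Fnorm with r; auto. apply inF_sub; auto.
    - rewrite pi_q_sub, Hum0. replace (Csub C0 (pi_q q n f k)) with (Copp (pi_q q n f k)) by Csolve.
      apply Cmod_opp. }
  assert (Hz : Cmod (pi_q q n f k) * c <= 0).
  { apply Rnot_lt_le. intros Hpos. destruct (Hconv rho Hrho _ Hpos) as [N HN]. specialize (HN N (le_n N)).
    specialize (Hb N). unfold Rdist in HN. rewrite Rminus_0_r in HN.
    pose proof (Rle_abs (Fnorm_bullet n (Fsub (u N) f) rho)). lra. }
  apply Cmod_eq0. pose proof (Cmod_ge0 (pi_q q n f k)). nra.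
Qed.

Lemma ker_closed_ideal q n r : q <> C0 -> radius_ok r ->
  closed_ideal n r (fun h => inF n r h /\ forall k, pi_q q n h k = C0).
Proof.
  intros Hq Hr. split; [|split; [|split; [|split; [|split]]]].
  - intros f [H _]; auto.
  - split. apply inF_F0. intros k. unfold pi_q. apply csum_zero. intros a _. destruct list_eq_dec; auto. apply Cmul_0_r.
  - intros f g [Hf Hf0] [Hg Hg0]. split. apply inF_add; auto. intros k. rewrite pi_q_add. unfold Oadd. rewrite Hf0, Hg0. Csolve.
  - intros c f [Hf Hf0]. split. apply inF_scale; auto. intros k. rewrite pi_q_scale. unfold Oscale. rewrite Hf0. apply Cmul_0_r.
  - intros f g [Hf Hf0] Hg. split; split; try apply inF_mul; auto; intros k; rewrite pi_q_mul.
    + apply Omul_zero_r; auto.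
    + apply Omul_zero_l; auto.
  - intros u f Hu Hf Hconv. split; auto. apply ker_closed_under_limits with r u; auto.
Qed.

Lemma qrel_in_ker q n r i j : q <> C0 -> (i < j < n)%nat -> inF n r (qrel q i j) /\ forall k, pi_q q n (qrel q i j) k = C0.
Proof. intros Hq Hij. assert (Hv1 : valid_word n [i; j]) by (repeat constructor; lia).
  assert (Hv2 : valid_word n [j; i]) by (repeat constructor; lia).
  rewrite qrel_eq. split.
  - apply inF_sub. apply inF_Fword; auto. apply inF_scale, inF_Fword; auto.
  - intros k. rewrite pi_q_sub, pi_q_scale. unfold Oscale. rewrite !pi_q_Fword by auto.
    assert (E : pvec n [j; i] = pvec n [i; j]).
    { apply pvec_eq_count; auto. intros x. apply (count_swap [] j i [] x). }
    rewrite E. destruct list_eq_dec; [|Csolve].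
    unfold pi_coef. assert (inversions [i; j] = 0%nat). { simpl. destruct (j <? i) eqn:F; [apply Nat.ltb_lt in F; lia|]. reflexivity. }
    assert (inversions [j; i] = 1%nat). { simpl. destruct (i <? j) eqn:F; [reflexivity|apply Nat.ltb_ge in F; lia]. }
    rewrite H, H0. simpl. pose proof (Cinv_mul q Hq). generalize (Cinv q) H1. intros z Hz.
    transitivity (Csub Defs.C1 (Cmul z q)). Csolve. rewrite Hz. Csolve. Qed.

Lemma ideal_in_ker q n r f : q <> C0 -> radius_ok r -> in_gen_ideal n r q f ->
  inF n r f /\ forall k, pi_q q n f k = C0.
Proof. intros Hq Hr H. apply (H (fun h => inF n r h /\ forall k, pi_q q n h k = C0)).
  apply ker_closed_ideal; auto. intros i j Hij. apply qrel_in_ker; auto. Qed.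

Lemma ker_pi_q_iff_gen_ideal q n r f : q <> C0 -> radius_ok r ->
  (inF n r f /\ forall k, pi_q q n f k = C0) <-> in_gen_ideal n r q f.
Proof.
  intros Hq Hr. split.
  - intros [Hf Hk]. apply ker_in_ideal; auto.
  - apply ideal_in_ker; auto.
Qed.

Theorem theorem7p10 (q : CC) (n : nat) (r : option R)
  (hq : q <> C0) (hr : radius_ok r) :
  exists pi : Fcoef -> Ocoef,
    (* (i) pi : F(B_r^n) -> O_q(B_r^n) is a unital algebra homomorphism *)
    (forall f, inF n r f -> inO n r q (pi f)) /\
    (forall f g c, inF n r f -> inF n r g ->
        (forall k, pi (Fadd f g) k = Oadd (pi f) (pi g) k) /\
        (forall k, pi (Fscale c f) k = Oscale c (pi f) k) /\
        (forall k, pi (Fmul f g) k = Omul q (pi f) (pi g) k)) /\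
    (forall k, pi F1 k = O1 n k) /\
    (* zeta_i |-> x_i *)
    (forall i, (i < n)%nat -> forall k, pi (zeta i) k = xgen n i k) /\
    (* continuity *)
    (forall rho, rho_in r rho -> exists rho' K, rho_in r rho' /\ 0 <= K /\
        forall f, inF n r f -> Onorm_B n q (pi f) rho <= K * Fnorm_bullet n f rho') /\
    (* surjectivity *)
    (forall g, inO n r q g -> exists f, inF n r f /\ forall k, pi f k = g k) /\
    (* (ii) Ker pi = closed two-sided ideal generated by zeta_i zeta_j - q zeta_j zeta_i *)
    (forall f, (inF n r f /\ forall k, pi f k = C0) <-> in_gen_ideal n r q f) /\
    (* (iii) Ker pi is complemented: continuous linear projection onto Ker pi *)
    (exists P : Fcoef -> Fcoef,
        (forall f, inF n r f -> inF n r (P f) /\ forall k, pi (P f) k = C0) /\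
        (forall f, inF n r f -> (forall k, pi f k = C0) -> forall a, P f a = f a) /\
        (forall f g c, inF n r f -> inF n r g ->
            (forall a, P (Fadd f g) a = Fadd (P f) (P g) a) /\
            (forall a, P (Fscale c f) a = Fscale c (P f) a)) /\
        (forall rho, rho_in r rho -> exists rho' K, rho_in r rho' /\ 0 <= K /\
            forall f, inF n r f -> Fnorm_bullet n (P f) rho <= K * Fnorm_bullet n f rho')) /\
    (* (iv) ||.||_{B,rho} is the quotient norm of ||.||^circ_rho *)
    (forall rho, rho_in r rho -> forall g, inO n r q g ->
        is_glb (fun t => exists f, inF n r f /\ (forall k, pi f k = g k) /\
                                   t = Fnorm_circ n f rho)
               (Onorm_B n q g rho)).
Proof.
  exists (pi_q q n).
  split; [|split; [|split; [|split; [|split; [|split; [|split; [|split]]]]]]].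
  - intros f Hf. apply pi_q_inO; auto.
  - intros f g c _ _. split; [|split]; intros k; [apply pi_q_add|apply pi_q_scale|apply pi_q_mul].
  - apply pi_q_F1.
  - intros i Hi k. apply pi_q_zeta; auto.
  - intros rho Hrho. apply pi_q_continuous; auto.
  - intros g Hg. exists (Olift q n g). split; [apply Olift_inF|intros k; apply pi_q_Olift with r]; auto.
  - intros f. apply ker_pi_q_iff_gen_ideal; auto.
  - exists (Pker q n). split; [|split; [|split]].
    + intros f Hf. split; [apply Pker_inF|intros k; apply pi_q_Pker with r]; auto.
    + intros f _ Hk a. apply Pker_id; auto.
    + intros f g c _ _. split; intros a; [apply Pker_add|apply Pker_scale].
    + intros rho Hrho. exists rho, 1. split; [|split]; auto; [lra|].
      intros f Hf. rewrite Rmult_1_l. apply Pker_norm_le with r; auto.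
  - intros rho Hrho g Hg. apply Onorm_B_quotient_norm; auto.
Qed.
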